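(* Let $k$ be an even function on $\mathbb R$ whose Fourier transform is nonnegative and supported in $[-1,1]$, and $K_\alpha(r)=k(r)(e^{i\alpha r}+e^{-i\alpha r})$. For every $\varepsilon>0$ there is $C_\varepsilon$ such that for all $\alpha\in\mathbb R$ and $t\ge1$, $$\Big|\int_{\mathbb R}r\tanh(\pi r)K_\alpha(r-t)\,dr\Big|+\Big|\int_{\mathbb R}r\tanh(\pi r)K_\alpha(r+t)\,dr\Big|\le C_\varepsilon\,t\,e^{-|\alpha|(\frac12-\varepsilon)}.$$ In particular, for $\alpha=2\beta\log T-C$ with $0<\beta\le1$ and $t\asymp T$, these integrals are $O(t^{1+\varepsilon-\beta})$.
   Context: Fourier transform convention $\hat k(u)=\int e^{iur}k(r)\,dr$; $k$ extends to an entire function, rapidly decreasing in horizontal strips. *)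

From Stdlib Require Import Reals Lra.
Open Scope R_scope.

Definition is_int_R (f : R -> R) (l : R) : Prop :=
  exists pr : forall a b : R, Riemann_integrable f a b,
    forall eps : R, 0 < eps -> exists M : R, forall a b : R,
      a <= - M -> M <= b -> Rabs (RiemannInt (pr a b) - l) < eps.

(* Minimal complex arithmetic on pairs (re, im). *)
Definition Cmul (z w : R * R) : R * R :=
  (fst z * fst w - snd z * snd w, fst z * snd w + snd z * fst w).
Fixpoint Cpow (z : R * R) (n : nat) : R * R :=
  match n with O => (1, 0) | S m => Cmul z (Cpow z m) end.
Definition Cnorm (z : R * R) : R := sqrt (fst z * fst z + snd z * snd z).

(* k extends to an entire function kc (given by an everywhere convergent power
   series sum a_n z^n) which agrees with k on the real line. *)
Definition entire_extension (k : R -> R) (kc : R * R -> R * R) : Prop :=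
  exists a : nat -> R,
    (forall z : R * R,
        Un_cv (fun N => sum_f_R0 (fun n => a n * fst (Cpow z n)) N) (fst (kc z)) /\
        Un_cv (fun N => sum_f_R0 (fun n => a n * snd (Cpow z n)) N) (snd (kc z))) /\
    (forall x : R, kc (x, 0) = (k x, 0)).

Definition rapid_decay_strips (kc : R * R -> R * R) : Prop :=
  forall (c : R) (N : nat), exists C : R, forall x y : R,
    Rabs y <= c -> Cnorm (kc (x, y)) <= C / (1 + Rabs x) ^ N.

(* K_alpha(r) = k(r)(e^{i alpha r} + e^{-i alpha r}) = 2 k(r) cos(alpha r). *)
Definition Kalpha (k : R -> R) (alpha r : R) : R := k r * (2 * cos (alpha * r)).

From Stdlib Require Import Reals Lra Lia Psatz ClassicalEpsilon FunctionalExtensionality.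
Open Scope R_scope.

(* Proof of mainTheorem12 by a contour shift; only the entire extension of k and its decay
   in strips are used.

   For alpha >= 0, r tanh(pi r) K_alpha(r - tau) = 2 Re F(r) with
   F(z) = z tanh(pi z) k(z - tau) e^{i alpha (z - tau)}, holomorphic on |Im z| <= sg < 1/2
   (tanh(pi z) has its first pole at i/2), where |F(x + i s)| <= K e^{-alpha s} / (1 + (x - tau)^2)
   with K = O(1 + |tau|).  Raising [A, B] to height sig < sg costs two vertical sides that
   vanish as A -> -oo, B -> +oo, so the improper integral is O(K e^{-alpha sig}); then take
   sig >= 1/2 - eps and tau = t, -t.

   Complex analysis is done by hand on pairs of reals: [hol sg F dF] packages the
   Cauchy-Riemann equations with locally Lipschitz F, dF; it is closed under the algebraic
   operations and exp, and the contour shift for it reduces to differentiating a parametric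
   integral (contour_shift).  As k is only known through its power series, the shift is
   applied to polynomial truncations and passed to the limit (section Integrand). *)

Lemma Rabs_le_between a b : Rabs a <= b -> - b <= a <= b.
Proof. intros; split_Rabs; lra. Qed.

(* Derivative combinators, stated so that they compose under [eapply dlim_eq]. *)
Lemma dlim_eq f x l l' : derivable_pt_lim f x l -> l = l' -> derivable_pt_lim f x l'.
Proof. intros H ->; exact H. Qed.

Lemma dlim_ext f g x l : (forall y, f y = g y) -> derivable_pt_lim f x l -> derivable_pt_lim g x l.
Proof.
  intros E H eps He; destruct (H eps He) as [d Hd]; exists d; intros h h0 hd.
  rewrite <- !E; apply Hd; auto.
Qed.

Lemma d_mul f g x a b : derivable_pt_lim f x a -> derivable_pt_lim g x b ->
  derivable_pt_lim (fun y => f y * g y) x (a * g x + f x * b).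
Proof. intros; apply dlim_eq with (a * g x + f x * b); [apply (derivable_pt_lim_mult f g); auto|ring]. Qed.

Lemma d_plus f g x a b : derivable_pt_lim f x a -> derivable_pt_lim g x b ->
  derivable_pt_lim (fun y => f y + g y) x (a + b).
Proof. intros; apply (derivable_pt_lim_plus f g); auto. Qed.

Lemma d_minus f g x a b : derivable_pt_lim f x a -> derivable_pt_lim g x b ->
  derivable_pt_lim (fun y => f y - g y) x (a - b).
Proof. intros; apply (derivable_pt_lim_minus f g); auto. Qed.

Lemma d_opp f x a : derivable_pt_lim f x a -> derivable_pt_lim (fun y => - f y) x (- a).
Proof. intros; apply (derivable_pt_lim_opp f); auto. Qed.

Lemma d_const c x : derivable_pt_lim (fun _ => c) x 0.
Proof. apply (derivable_pt_lim_const c). Qed.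

Lemma d_id x : derivable_pt_lim (fun y => y) x 1.
Proof. apply derivable_pt_lim_id. Qed.

Lemma d_exp f x a : derivable_pt_lim f x a -> derivable_pt_lim (fun y => exp (f y)) x (exp (f x) * a).
Proof. intros H; apply (derivable_pt_lim_comp f exp); auto; apply derivable_pt_lim_exp. Qed.

Lemma d_cos f x a : derivable_pt_lim f x a -> derivable_pt_lim (fun y => cos (f y)) x (- sin (f x) * a).
Proof. intros H; apply (derivable_pt_lim_comp f cos); auto; apply derivable_pt_lim_cos. Qed.

Lemma d_sin f x a : derivable_pt_lim f x a -> derivable_pt_lim (fun y => sin (f y)) x (cos (f x) * a).
Proof. intros H; apply (derivable_pt_lim_comp f sin); auto; apply derivable_pt_lim_sin. Qed.

Lemma d_inv f x a : derivable_pt_lim f x a -> f x <> 0 ->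
  derivable_pt_lim (fun y => / f y) x (- a / (f x * f x)).
Proof.
  intros H Hn.
  pose (pr := exist (fun l => derivable_pt_lim f x l) a H : derivable_pt f x).
  apply derive_pt_eq_1 with (pr := derivable_pt_inv f x Hn pr).
  rewrite derive_pt_inv. unfold Rsqr. reflexivity.
Qed.

Lemma mvt_any f f' u v : (forall c, Rmin u v <= c <= Rmax u v -> derivable_pt_lim f c (f' c)) ->
  exists c, Rmin u v <= c <= Rmax u v /\ f v - f u = f' c * (v - u).
Proof.
  intros H. destruct (Rtotal_order u v) as [l|[e|g]].
  - destruct (MVT_cor2 f f' u v l) as [c [Hc2 Hc]].
    + intros c Hc; apply H; rewrite Rmin_left, Rmax_right; lra.
    + exists c; split; [rewrite Rmin_left, Rmax_right; lra|auto].
  - subst; exists v; split; [rewrite Rmin_left, Rmax_left; lra|ring].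
  - destruct (MVT_cor2 f f' v u g) as [c [Hc2 Hc]].
    + intros c Hc; apply H; rewrite Rmin_right, Rmax_left; lra.
    + exists c; split; [rewrite Rmin_right, Rmax_left; lra|].
      replace (f v - f u) with (- (f u - f v)) by ring. rewrite Hc2; ring.
Qed.

(* A total Riemann integral: [Integ f a b] is the Riemann integral of f over [a, b]
   whenever f is Riemann integrable there (and 0 otherwise), so that integrals can be
   manipulated as plain real numbers. *)
Definition Integ (f : R -> R) (a b : R) : R :=
  match excluded_middle_informative (exists _ : Riemann_integrable f a b, True) with
  | left H => RiemannInt (proj1_sig (constructive_indefinite_description _ H))
  | right _ => 0
  end.

Lemma Integ_eq f a b (pr : Riemann_integrable f a b) : Integ f a b = RiemannInt pr.
Proof.
  unfold Integ; destruct excluded_middle_informative as [H|H].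
  - apply RiemannInt_P5.
  - exfalso; apply H; exists pr; auto.
Qed.

Definition cont_on (f : R -> R) a b := forall x, a <= x <= b -> continuity_pt f x.

Lemma cont_on_int f a b : a <= b -> cont_on f a b -> Riemann_integrable f a b.
Proof. intros; apply continuity_implies_RiemannInt; auto. Qed.

Lemma cont_on_const c a b : cont_on (fun _ => c) a b.
Proof. intros x _; apply continuity_pt_const; intros u v; auto. Qed.

Lemma cont_on_lin f g l a b : cont_on f a b -> cont_on g a b -> cont_on (fun x => f x + l * g x) a b.
Proof.
  intros Cf Cg x Hx. apply (continuity_pt_plus f (fun x => l * g x)); auto.
  apply (continuity_pt_scal g); auto.
Qed.

Lemma cont_on_abs f a b : cont_on f a b -> cont_on (fun x => Rabs (f x)) a b.
Proof. intros Cf x Hx. apply (continuity_pt_comp f Rabs); auto. apply Rcontinuity_abs. Qed.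

Lemma Integ_lin f g l a b : a <= b -> cont_on f a b -> cont_on g a b ->
  Integ (fun x => f x + l * g x) a b = Integ f a b + l * Integ g a b.
Proof.
  intros ab Cf Cg.
  pose proof (cont_on_int f a b ab Cf) as pf.
  pose proof (cont_on_int g a b ab Cg) as pg.
  rewrite (Integ_eq _ _ _ (RiemannInt_P10 l pf pg)), (Integ_eq _ _ _ pf), (Integ_eq _ _ _ pg).
  apply RiemannInt_P12; auto.
Qed.

Lemma Integ_ext f g a b : a <= b -> (forall x, a <= x <= b -> f x = g x) -> Integ f a b = Integ g a b.
Proof.
  intros ab E.
  assert (E' : forall x, Rmin a b <= x <= Rmax a b -> f x = g x)
    by (rewrite Rmin_left, Rmax_right; auto).
  assert (E'' : forall x, Rmin a b <= x <= Rmax a b -> g x = f x) by (intros; symmetry; auto).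
  unfold Integ.
  destruct (excluded_middle_informative (exists _ : Riemann_integrable f a b, True)) as [H1|H1];
  destruct (excluded_middle_informative (exists _ : Riemann_integrable g a b, True)) as [H2|H2].
  - apply RiemannInt_P18; auto. intros; apply E; lra.
  - exfalso; apply H2; destruct H1 as [p _]; exists (Riemann_integrable_ext _ E' p); auto.
  - exfalso; apply H1; destruct H2 as [p _]; exists (Riemann_integrable_ext _ E'' p); auto.
  - reflexivity.
Qed.

Lemma Integ_const c a b : Integ (fun _ => c) a b = c * (b - a).
Proof.
  change (Integ (fct_cte c) a b = c * (b - a)).
  rewrite (Integ_eq _ _ _ (RiemannInt_P14 a b c)). apply RiemannInt_P15.
Qed.

Lemma Integ_scal f l a b : a <= b -> cont_on f a b -> Integ (fun x => l * f x) a b = l * Integ f a b.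
Proof.
  intros ab Cf. transitivity (Integ (fun x => 0 + l * f x) a b).
  - apply Integ_ext; auto; intros; ring.
  - rewrite Integ_lin; auto; [rewrite Integ_const; ring|apply cont_on_const].
Qed.

Lemma Integ_minus f g a b : a <= b -> cont_on f a b -> cont_on g a b ->
  Integ (fun x => f x - g x) a b = Integ f a b - Integ g a b.
Proof.
  intros ab Cf Cg.
  transitivity (Integ (fun x => f x + (-1) * g x) a b).
  - apply Integ_ext; auto; intros; ring.
  - rewrite Integ_lin; auto; ring.
Qed.

Lemma Integ_le f g a b : a <= b -> cont_on f a b -> cont_on g a b ->
  (forall x, a < x < b -> f x <= g x) -> Integ f a b <= Integ g a b.
Proof.
  intros ab Cf Cg H.
  rewrite (Integ_eq _ _ _ (cont_on_int f a b ab Cf)), (Integ_eq _ _ _ (cont_on_int g a b ab Cg)).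
  apply RiemannInt_P19; auto.
Qed.

Lemma Integ_abs_le f g a b : a <= b -> cont_on f a b -> cont_on g a b ->
  (forall x, a < x < b -> Rabs (f x) <= g x) -> Rabs (Integ f a b) <= Integ g a b.
Proof.
  intros ab Cf Cg H.
  pose proof (cont_on_int f a b ab Cf) as pf.
  pose proof (cont_on_int _ a b ab (cont_on_abs f a b Cf)) as pa.
  rewrite (Integ_eq _ _ _ pf).
  eapply Rle_trans. apply (RiemannInt_P17 pf pa); auto.
  rewrite <- (Integ_eq _ _ _ pa). apply Integ_le; auto. apply cont_on_abs; auto.
Qed.

Lemma Integ_bound f a b K : a <= b -> cont_on f a b ->
  (forall x, a < x < b -> Rabs (f x) <= K) -> Rabs (Integ f a b) <= K * (b - a).
Proof.
  intros ab Cf H. rewrite <- Integ_const. apply Integ_abs_le; auto. apply cont_on_const.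
Qed.

Lemma Integ_split f a b c : a <= b -> b <= c -> cont_on f a c ->
  Integ f a b + Integ f b c = Integ f a c.
Proof.
  intros ab bc Cf.
  assert (Cf1 : cont_on f a b) by (intros x Hx; apply Cf; lra).
  assert (Cf2 : cont_on f b c) by (intros x Hx; apply Cf; lra).
  rewrite (Integ_eq _ _ _ (cont_on_int f a b ab Cf1)), (Integ_eq _ _ _ (cont_on_int f b c bc Cf2)),
    (Integ_eq _ _ _ (cont_on_int f a c ltac:(lra) Cf)).
  apply RiemannInt_P26.
Qed.

Lemma Integ_FTC f F a b : a <= b -> cont_on f a b ->
  (forall c, a <= c <= b -> derivable_pt_lim F c (f c)) ->
  Integ f a b = F b - F a.
Proof.
  intros ab Cf HF.
  destruct (Req_dec a b) as [E|NE].
  { subst. rewrite (Integ_eq _ _ _ (RiemannInt_P7 f b)), RiemannInt_P9. ring. }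
  set (G := primitive ab (FTC_P1 ab Cf)).
  assert (HG : forall c, a <= c <= b -> derivable_pt_lim G c (f c)).
  { intros c Hc; apply RiemannInt_P28; auto. }
  rewrite (Integ_eq _ _ _ (cont_on_int f a b ab Cf)), (RiemannInt_P20 ab (FTC_P1 ab Cf)).
  fold G.
  destruct (MVT_cor2 (fun x => F x - G x) (fun x => f x - f x) a b) as [c [Hc _]].
  - lra.
  - intros c Hc; apply d_minus; auto.
  - replace (f c - f c) with 0 in Hc by ring. lra.
Qed.
(* This is the regularity required of holomorphic functions and their derivatives on the
   strip |Im z| <= sg, preserved by the algebraic operations. *)
Definition lip_strip (sg : R) (f : R -> R -> R) : Prop :=
  forall R0, 0 <= R0 -> exists M L, 0 <= L /\ forall x s x' s',
    Rabs x <= R0 -> Rabs s <= sg -> Rabs x' <= R0 -> Rabs s' <= sg ->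
    Rabs (f x s) <= M /\ Rabs (f x s - f x' s') <= L * (Rabs (x - x') + Rabs (s - s')).

Lemma lip_strip_const sg c : lip_strip sg (fun _ _ => c).
Proof.
  intros R0 _; exists (Rabs c), 0; split; [lra|]; intros; split; [lra|].
  replace (c - c) with 0 by ring; rewrite Rabs_R0; lra.
Qed.

Lemma lip_strip_plus sg f g : lip_strip sg f -> lip_strip sg g -> lip_strip sg (fun x s => f x s + g x s).
Proof.
  intros Hf Hg R0 HR. destruct (Hf R0 HR) as [M1 [L1 [HL1 H1]]]; destruct (Hg R0 HR) as [M2 [L2 [HL2 H2]]].
  exists (M1 + M2), (L1 + L2); split; [lra|]; intros x s x' s' a b c d.
  destruct (H1 x s x' s' a b c d) as [A B]; destruct (H2 x s x' s' a b c d) as [C D].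
  split.
  - eapply Rle_trans; [apply Rabs_triang|lra].
  - replace (f x s + g x s - (f x' s' + g x' s')) with ((f x s - f x' s') + (g x s - g x' s')) by ring.
    eapply Rle_trans; [apply Rabs_triang|lra].
Qed.

Lemma lip_strip_opp sg f : lip_strip sg f -> lip_strip sg (fun x s => - f x s).
Proof.
  intros Hf R0 HR. destruct (Hf R0 HR) as [M1 [L1 [HL1 H1]]].
  exists M1, L1; split; [lra|]; intros x s x' s' a b c d.
  destruct (H1 x s x' s' a b c d) as [A B]. rewrite Rabs_Ropp. split; auto.
  replace (- f x s - - f x' s') with (-(f x s - f x' s')) by ring. rewrite Rabs_Ropp; auto.
Qed.

Lemma lip_strip_minus sg f g : lip_strip sg f -> lip_strip sg g -> lip_strip sg (fun x s => f x s - g x s).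
Proof. intros; apply (lip_strip_plus sg f (fun x s => - g x s)); auto; apply lip_strip_opp; auto. Qed.

Lemma lip_strip_mult sg f g : lip_strip sg f -> lip_strip sg g -> lip_strip sg (fun x s => f x s * g x s).
Proof.
  intros Hf Hg R0 HR. destruct (Hf R0 HR) as [M1 [L1 [HL1 H1]]]; destruct (Hg R0 HR) as [M2 [L2 [HL2 H2]]].
  exists (Rabs M1 * Rabs M2), (Rabs M1 * L2 + Rabs M2 * L1); split.
  { pose proof (Rabs_pos M1); pose proof (Rabs_pos M2); nra. }
  intros x s x' s' a b c d.
  destruct (H1 x s x' s' a b c d) as [A B]; destruct (H2 x s x' s' a b c d) as [C D].
  destruct (H2 x' s' x' s' c d c d) as [C' _].
  pose proof (Rle_abs M1); pose proof (Rle_abs M2).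
  pose proof (Rabs_pos (f x s)); pose proof (Rabs_pos (g x' s')).
  pose proof (Rabs_pos (x - x')); pose proof (Rabs_pos (s - s')).
  split.
  - rewrite Rabs_mult. apply Rmult_le_compat; try apply Rabs_pos; lra.
  - replace (f x s * g x s - f x' s' * g x' s') with (f x s * (g x s - g x' s') + g x' s' * (f x s - f x' s')) by ring.
    eapply Rle_trans; [apply Rabs_triang|]. rewrite !Rabs_mult.
    set (dd := Rabs (x - x') + Rabs (s - s')) in *.
    assert (Rabs (f x s) * Rabs (g x s - g x' s') <= Rabs M1 * (L2 * dd)).
    { apply Rmult_le_compat; auto; try lra; apply Rabs_pos. }
    assert (Rabs (g x' s') * Rabs (f x s - f x' s') <= Rabs M2 * (L1 * dd)).
    { apply Rmult_le_compat; auto; try lra; apply Rabs_pos. }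
    nra.
Qed.

Lemma lip_strip_inv sg f m : 0 < m -> lip_strip sg f -> (forall x s, Rabs s <= sg -> m <= f x s) ->
  lip_strip sg (fun x s => / f x s).
Proof.
  intros Hm Hf Hlow R0 HR. destruct (Hf R0 HR) as [M1 [L1 [HL1 H1]]].
  exists (/ m), (L1 / (m * m)); split.
  { apply Rmult_le_pos; auto. left; apply Rinv_0_lt_compat; nra. }
  intros x s x' s' a b c d.
  destruct (H1 x s x' s' a b c d) as [A B].
  pose proof (Hlow x s b); pose proof (Hlow x' s' d).
  split.
  - rewrite Rabs_pos_eq by (left; apply Rinv_0_lt_compat; lra).
    apply Rinv_le_contravar; lra.
  - replace (/ f x s - / f x' s') with ((f x' s' - f x s) / (f x s * f x' s')) by (field; lra).
    unfold Rdiv. rewrite Rabs_mult, Rabs_inv, (Rabs_pos_eq (f x s * f x' s')) by nra.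
    rewrite <- Rabs_Ropp. replace (- (f x' s' - f x s)) with (f x s - f x' s') by ring.
    assert (/ (f x s * f x' s') <= / (m * m)) by (apply Rinv_le_contravar; nra).
    pose proof (Rabs_pos (f x s - f x' s')).
    assert (0 <= / (f x s * f x' s')) by (left; apply Rinv_0_lt_compat; nra).
    eapply Rle_trans. apply Rmult_le_compat; eauto.
    unfold Rdiv; lra.
Qed.

Definition lip_line (phi : R -> R) : Prop :=
  forall R0, 0 <= R0 -> exists M L, 0 <= L /\ forall y y', Rabs y <= R0 -> Rabs y' <= R0 ->
    Rabs (phi y) <= M /\ Rabs (phi y - phi y') <= L * Rabs (y - y').

Lemma lip_strip_comp sg phi p q c : lip_line phi -> lip_strip sg (fun x s => phi (p * x + q * s + c)).
Proof.
  intros Hp R0 HR.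
  set (R1 := Rabs p * R0 + Rabs q * Rabs sg + Rabs c).
  assert (HR1 : 0 <= R1) by (unfold R1; pose proof (Rabs_pos p); pose proof (Rabs_pos q);
     pose proof (Rabs_pos sg); pose proof (Rabs_pos c); nra).
  destruct (Hp R1 HR1) as [M [L [HL H]]].
  exists M, (L * (Rabs p + Rabs q)); split.
  { pose proof (Rabs_pos p); pose proof (Rabs_pos q); nra. }
  assert (Hin : forall x s, Rabs x <= R0 -> Rabs s <= sg -> Rabs (p * x + q * s + c) <= R1).
  { intros x s hx hs. unfold R1.
    eapply Rle_trans; [apply Rabs_triang|]. eapply Rle_trans; [apply Rplus_le_compat_r; apply Rabs_triang|].
    rewrite !Rabs_mult. pose proof (Rabs_pos p); pose proof (Rabs_pos q).
    pose proof (Rle_abs sg). apply Rplus_le_compat_r. apply Rplus_le_compat; apply Rmult_le_compat_l; lra. }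
  intros x s x' s' a b c0 d.
  destruct (H _ _ (Hin x s a b) (Hin x' s' c0 d)) as [A B].
  split; auto. eapply Rle_trans; [apply B|].
  replace (p * x + q * s + c - (p * x' + q * s' + c)) with (p * (x - x') + q * (s - s')) by ring.
  rewrite Rmult_assoc. apply Rmult_le_compat_l; auto.
  eapply Rle_trans; [apply Rabs_triang|]. rewrite !Rabs_mult.
  pose proof (Rabs_pos p); pose proof (Rabs_pos q); pose proof (Rabs_pos (x - x')); pose proof (Rabs_pos (s - s')).
  nra.
Qed.

Lemma lip_line_of_deriv phi phi' : (forall y, derivable_pt_lim phi y (phi' y)) ->
  (forall R0, 0 <= R0 -> exists M, forall y, Rabs y <= R0 -> Rabs (phi' y) <= M) -> lip_line phi.
Proof.
  intros Hd Hb R0 HR. destruct (Hb R0 HR) as [M HM].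
  assert (HM0 : 0 <= M) by (pose proof (HM 0 ltac:(rewrite Rabs_R0; lra)); pose proof (Rabs_pos (phi' 0)); lra).
  exists (Rabs (phi 0) + M * R0), M; split; auto.
  assert (Lip : forall y y', Rabs y <= R0 -> Rabs y' <= R0 -> Rabs (phi y - phi y') <= M * Rabs (y - y')).
  { intros y y' hy hy'.
    destruct (MVT_abs phi phi' y' y) as [c [Hc Hc2]].
    { intros; apply Hd. }
    rewrite Hc. apply Rmult_le_compat_r; [apply Rabs_pos|]. apply HM.
    apply Rabs_le. pose proof (Rmin_l y' y); pose proof (Rmax_l y' y); pose proof (Rmin_r y' y); pose proof (Rmax_r y' y).
    apply Rabs_le_between in hy, hy'. destruct (Rle_dec y' y).
    - rewrite Rmin_left, Rmax_right in Hc2; lra.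
    - rewrite Rmin_right, Rmax_left in Hc2; lra. }
  intros y y' hy hy'. split; auto.
  replace (phi y) with (phi 0 + (phi y - phi 0)) by ring.
  eapply Rle_trans; [apply Rabs_triang|]. apply Rplus_le_compat_l.
  eapply Rle_trans; [apply Lip; auto; rewrite Rabs_R0; lra|].
  rewrite Rminus_0_r. apply Rmult_le_compat_l; auto.
Qed.

Lemma lip_line_exp : lip_line exp.
Proof.
  apply (lip_line_of_deriv exp exp); [apply derivable_pt_lim_exp|].
  intros R0 _; exists (exp R0); intros y hy. rewrite Rabs_pos_eq by (left; apply exp_pos).
  destruct (Rle_lt_or_eq_dec y R0) as [h|h]; [apply Rabs_le_between in hy; lra| left; apply exp_increasing; auto| subst; lra].
Qed.

Lemma lip_line_cos : lip_line cos.
Proof.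
  apply (lip_line_of_deriv cos (fun y => - sin y)); [apply derivable_pt_lim_cos|].
  intros R0 _; exists 1; intros y _. rewrite Rabs_Ropp. apply Rabs_le; apply SIN_bound.
Qed.

Lemma lip_line_sin : lip_line sin.
Proof.
  apply (lip_line_of_deriv sin cos); [apply derivable_pt_lim_sin|].
  intros R0 _; exists 1; intros y _. apply Rabs_le; apply COS_bound.
Qed.

Lemma lip_line_id : lip_line (fun y => y).
Proof.
  apply (lip_line_of_deriv (fun y => y) (fun _ => 1)); [apply d_id|].
  intros R0 _; exists 1; intros; rewrite Rabs_R1; lra.
Qed.

Lemma lip_strip_cont sg f s : lip_strip sg f -> Rabs s <= sg -> forall x, continuity_pt (fun x => f x s) x.
Proof.
  intros Hf hs x. destruct (Hf (Rabs x + 1) ltac:(pose proof (Rabs_pos x); lra)) as [M [L [HL H]]].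
  intros eps Heps. exists (Rmin 1 (eps / (L + 1))). split.
  { apply Rmin_pos; [lra|]. apply Rdiv_lt_0_compat; lra. }
  intros y [_ hy]. simpl in *. unfold R_dist in *.
  assert (hy1 : Rabs (y - x) < 1) by (eapply Rlt_le_trans; [apply hy|apply Rmin_l]).
  assert (hy2 : Rabs (y - x) < eps / (L + 1)) by (eapply Rlt_le_trans; [apply hy|apply Rmin_r]).
  assert (Rabs y <= Rabs x + 1).
  { replace y with (x + (y - x)) by ring. eapply Rle_trans; [apply Rabs_triang|lra]. }
  destruct (H y s x s) as [_ B]; auto; try lra.
  replace (s - s) with 0 in B by ring. rewrite Rabs_R0, Rplus_0_r in B.
  eapply Rle_lt_trans; [apply B|].
  assert (L * Rabs (y - x) <= L * (eps / (L+1))) by (apply Rmult_le_compat_l; lra).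
  assert (L * (eps / (L+1)) < eps).
  { unfold Rdiv. replace (L * (eps * / (L+1))) with (eps * (L / (L+1))) by (field; lra).
    assert (L / (L+1) < 1).
    { apply (Rmult_lt_reg_r (L+1)); [lra|]. unfold Rdiv; rewrite Rmult_assoc, Rinv_l by lra; lra. }
    assert (0 <= L / (L+1)) by (unfold Rdiv; apply Rmult_le_pos; [lra|left; apply Rinv_0_lt_compat; lra]). nra. }
  lra.
Qed.
Definition Cadd (z w : R * R) : R * R := (fst z + fst w, snd z + snd w).
Definition Copp (z : R * R) : R * R := (- fst z, - snd z).
Definition Cnsq (z : R * R) : R := fst z * fst z + snd z * snd z.
Definition Cinv (z : R * R) : R * R := (fst z * / Cnsq z, - snd z * / Cnsq z).

Definition lip_strip_c sg (F : R -> R -> R * R) : Prop :=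
  lip_strip sg (fun x s => fst (F x s)) /\ lip_strip sg (fun x s => snd (F x s)).

(* [hol sg F dF]: F(x, s), viewed as a function of z = x + i s, is holomorphic on the strip
   |s| < sg with complex derivative dF: the partial derivatives of F are dF (in x) and
   i dF (in s), i.e. the Cauchy-Riemann equations hold; F and dF are locally Lipschitz on
   the closed strip. *)
Definition hol sg (F dF : R -> R -> R * R) : Prop :=
  lip_strip_c sg F /\ lip_strip_c sg dF /\ forall x s, Rabs s < sg ->
  derivable_pt_lim (fun y => fst (F y s)) x (fst (dF x s)) /\
  derivable_pt_lim (fun y => snd (F y s)) x (snd (dF x s)) /\
  derivable_pt_lim (fun r => fst (F x r)) s (- snd (dF x s)) /\
  derivable_pt_lim (fun r => snd (F x r)) s (fst (dF x s)).

Lemma hol_const sg c : hol sg (fun _ _ => c) (fun _ _ => (0, 0)).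
Proof.
  split; [split; apply lip_strip_const|]. split; [split; apply lip_strip_const|].
  intros x s _; simpl; repeat split; try apply d_const.
  apply dlim_eq with 0; [apply d_const|cbv beta; ring].
Qed.

Lemma hol_add sg F dF G dG : hol sg F dF -> hol sg G dG ->
  hol sg (fun x s => Cadd (F x s) (G x s)) (fun x s => Cadd (dF x s) (dG x s)).
Proof.
  intros [[F1 F2] [[D1 D2] HF]] [[G1 G2] [[E1 E2] HG]]. unfold Cadd; simpl.
  split; [split; apply lip_strip_plus; auto|]. split; [split; apply lip_strip_plus; auto|].
  intros x s hs. destruct (HF x s hs) as [a [b [c d]]]; destruct (HG x s hs) as [a' [b' [c' d']]].
  simpl; repeat split; try solve [apply d_plus; auto].
  eapply dlim_eq; [apply d_plus; eauto|cbv beta; ring].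
Qed.

Lemma hol_mul sg F dF G dG : hol sg F dF -> hol sg G dG ->
  hol sg (fun x s => Cmul (F x s) (G x s))
         (fun x s => Cadd (Cmul (dF x s) (G x s)) (Cmul (F x s) (dG x s))).
Proof.
  intros [[F1 F2] [[D1 D2] HF]] [[G1 G2] [[E1 E2] HG]]. unfold Cadd, Cmul; simpl.
  split; [split; [apply lip_strip_minus|apply lip_strip_plus]; apply lip_strip_mult; auto|].
  split; [split; apply lip_strip_plus; [apply lip_strip_minus|apply lip_strip_minus|apply lip_strip_plus|apply lip_strip_plus]; apply lip_strip_mult; auto|].
  intros x s hs. destruct (HF x s hs) as [a [b [c d]]]; destruct (HG x s hs) as [a' [b' [c' d']]].
  simpl; repeat split.
  - eapply dlim_eq; [apply d_minus; apply d_mul; eauto|cbv beta; ring].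
  - eapply dlim_eq; [apply d_plus; apply d_mul; eauto|cbv beta; ring].
  - eapply dlim_eq; [apply d_minus; apply d_mul; eauto|cbv beta; ring].
  - eapply dlim_eq; [apply d_plus; apply d_mul; eauto|cbv beta; ring].
Qed.

Lemma hol_inv sg F dF m : 0 < m -> hol sg F dF ->
  (forall x s, Rabs s <= sg -> m <= Cnsq (F x s)) ->
  hol sg (fun x s => Cinv (F x s))
         (fun x s => Copp (Cmul (dF x s) (Cmul (Cinv (F x s)) (Cinv (F x s))))).
Proof.
  intros Hm [[F1 F2] [[D1 D2] HF]] Hlow.
  assert (LD : lip_strip sg (fun x s => / Cnsq (F x s))).
  { apply lip_strip_inv with m; auto. unfold Cnsq; apply lip_strip_plus; apply lip_strip_mult; auto. }
  assert (L1 : lip_strip sg (fun x s => fst (Cinv (F x s)))).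
  { unfold Cinv; simpl. apply lip_strip_mult; auto. }
  assert (L2 : lip_strip sg (fun x s => snd (Cinv (F x s)))).
  { unfold Cinv; simpl. apply lip_strip_mult; auto. apply lip_strip_opp; auto. }
  split; [split; auto|].
  split.
  { unfold Copp, Cmul; simpl. split; apply lip_strip_opp;
    [apply lip_strip_minus|apply lip_strip_plus]; apply lip_strip_mult; auto;
    [apply lip_strip_minus|apply lip_strip_plus|apply lip_strip_plus|apply lip_strip_minus]; apply lip_strip_mult; auto. }
  intros x s hs.
  assert (hs' : Rabs s <= sg) by lra.
  pose proof (Hlow x s hs') as Hl.
  destruct (HF x s hs) as [a [b [c d]]].
  assert (dD1 : derivable_pt_lim (fun y => Cnsq (F y s)) x
     (2 * (fst (F x s) * fst (dF x s) + snd (F x s) * snd (dF x s)))).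
  { unfold Cnsq. eapply dlim_eq; [apply d_plus; apply d_mul; eauto|cbv beta; ring]. }
  assert (dD2 : derivable_pt_lim (fun r => Cnsq (F x r)) s
     (2 * (fst (F x s) * (- snd (dF x s)) + snd (F x s) * fst (dF x s)))).
  { unfold Cnsq. eapply dlim_eq; [apply d_plus; apply d_mul; eauto|cbv beta; ring]. }
  assert (Hn : Cnsq (F x s) <> 0) by lra.
  pose proof (d_inv _ _ _ dD1 Hn) as i1.
  pose proof (d_inv _ _ _ dD2 Hn) as i2.
  unfold Cinv, Copp, Cmul; simpl.
  unfold Cnsq in *. simpl.
  repeat split.
  - eapply dlim_eq; [apply d_mul; eauto|]. cbv beta; field; auto.
  - eapply dlim_eq; [apply d_mul; [apply d_opp|]; eauto|]. cbv beta; field; auto.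
  - eapply dlim_eq; [apply d_mul; eauto|]. cbv beta; field; auto.
  - eapply dlim_eq; [apply d_mul; [apply d_opp|]; eauto|]. cbv beta; field; auto.
Qed.

Lemma hol_z sg tau : hol sg (fun x s => (x - tau, s)) (fun _ _ => (1, 0)).
Proof.
  assert (LBx : lip_strip sg (fun x s => x - tau)).
  { replace (fun x s : R => x - tau) with (fun x s => (fun y => y) (1 * x + 0 * s + - tau)).
    - exact (lip_strip_comp sg (fun y => y) 1 0 (-tau) lip_line_id).
    - do 2 (apply functional_extensionality; intro); ring. }
  assert (LBs : lip_strip sg (fun x s => s)).
  { replace (fun x s : R => s) with (fun x s => (fun y => y) (0 * x + 1 * s + 0)).
    - exact (lip_strip_comp sg (fun y => y) 0 1 0 lip_line_id).
    - do 2 (apply functional_extensionality; intro); ring. }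
  split; [split; simpl; auto|]. split; [split; apply lip_strip_const|].
  intros x s _; simpl; repeat split.
  - eapply dlim_eq; [apply d_minus; [apply d_id|apply d_const]|cbv beta; ring].
  - apply d_const.
  - eapply dlim_eq; [apply d_const|cbv beta; ring].
  - apply d_id.
Qed.

(* Cexp p q x s = e^{(p + i q)(x + i s)}. *)
Definition Cexp (p q x s : R) : R * R :=
  (exp (p * x - q * s) * cos (q * x + p * s), exp (p * x - q * s) * sin (q * x + p * s)).

Lemma hol_exp sg p q tau : hol sg (fun x s => Cexp p q (x - tau) s) (fun x s => Cmul (p, q) (Cexp p q (x - tau) s)).
Proof.
  assert (LE : lip_strip sg (fun x s => exp (p * (x - tau) - q * s))).
  { replace (fun x s => exp (p * (x - tau) - q * s)) with (fun x s => exp (p * x + (- q) * s + (- p * tau))).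
    - exact (lip_strip_comp sg exp p (-q) (- p * tau) lip_line_exp).
    - do 2 (apply functional_extensionality; intro); f_equal; ring. }
  assert (LC : lip_strip sg (fun x s => cos (q * (x - tau) + p * s))).
  { replace (fun x s => cos (q * (x - tau) + p * s)) with (fun x s => cos (q * x + p * s + (- q * tau))).
    - exact (lip_strip_comp sg cos q p (- q * tau) lip_line_cos).
    - do 2 (apply functional_extensionality; intro); f_equal; ring. }
  assert (LS : lip_strip sg (fun x s => sin (q * (x - tau) + p * s))).
  { replace (fun x s => sin (q * (x - tau) + p * s)) with (fun x s => sin (q * x + p * s + (- q * tau))).
    - exact (lip_strip_comp sg sin q p (- q * tau) lip_line_sin).
    - do 2 (apply functional_extensionality; intro); f_equal; ring. }
  unfold Cexp, Cmul; simpl.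
  split; [split; apply lip_strip_mult; auto|].
  split; [split; [apply lip_strip_minus|apply lip_strip_plus]; apply lip_strip_mult; try apply lip_strip_const; apply lip_strip_mult; auto|].
  intros x s _. simpl.
  assert (ex : derivable_pt_lim (fun y => p * (y - tau) - q * s) x p).
  { eapply dlim_eq; [apply d_minus; [apply d_mul; [apply d_const|apply d_minus; [apply d_id|apply d_const]]|apply d_const]|cbv beta; ring]. }
  assert (es : derivable_pt_lim (fun r => p * (x - tau) - q * r) s (- q)).
  { eapply dlim_eq; [apply d_minus; [apply d_const|apply d_mul; [apply d_const|apply d_id]]|cbv beta; ring]. }
  assert (ax : derivable_pt_lim (fun y => q * (y - tau) + p * s) x q).
  { eapply dlim_eq; [apply d_plus; [apply d_mul; [apply d_const|apply d_minus; [apply d_id|apply d_const]]|apply d_const]|cbv beta; ring]. }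
  assert (as_ : derivable_pt_lim (fun r => q * (x - tau) + p * r) s p).
  { eapply dlim_eq; [apply d_plus; [apply d_const|apply d_mul; [apply d_const|apply d_id]]|cbv beta; ring]. }
  repeat split.
  - eapply dlim_eq; [apply d_mul; [apply d_exp|apply d_cos]; eauto|cbv beta; ring].
  - eapply dlim_eq; [apply d_mul; [apply d_exp|apply d_sin]; eauto|cbv beta; ring].
  - eapply dlim_eq; [apply d_mul; [apply d_exp|apply d_cos]; eauto|cbv beta; ring].
  - eapply dlim_eq; [apply d_mul; [apply d_exp|apply d_sin]; eauto|cbv beta; ring].
Qed.

Definition holo sg F := exists dF, hol sg F dF.

Lemma holo_ext sg F G : (forall x s, F x s = G x s) -> holo sg F -> holo sg G.
Proof.
  intros E H. replace G with F; auto.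
  do 2 (apply functional_extensionality; intro); auto.
Qed.

Lemma holo_mul sg F G : holo sg F -> holo sg G -> holo sg (fun x s => Cmul (F x s) (G x s)).
Proof. intros [dF HF] [dG HG]; eexists; apply hol_mul; eauto. Qed.

Lemma holo_add sg F G : holo sg F -> holo sg G -> holo sg (fun x s => Cadd (F x s) (G x s)).
Proof. intros [dF HF] [dG HG]; eexists; apply hol_add; eauto. Qed.

Lemma holo_const sg c : holo sg (fun _ _ => c).
Proof. eexists; apply hol_const. Qed.

Lemma holo_pow sg tau n : holo sg (fun x s => Cpow (x - tau, s) n).
Proof.
  induction n.
  - exact (holo_const sg (1, 0)).
  - simpl. apply (holo_mul sg (fun x s => (x - tau, s)) (fun x s => Cpow (x - tau, s) n)); auto.
    eexists; apply hol_z.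
Qed.

Lemma holo_cont sg F s x : holo sg F -> Rabs s <= sg ->
  continuity_pt (fun y => fst (F y s)) x /\ continuity_pt (fun y => snd (F y s)) x.
Proof.
  intros [dF [[H1 H2] _]] hs. split.
  - apply (lip_strip_cont sg (fun x s => fst (F x s))); auto.
  - apply (lip_strip_cont sg (fun x s => snd (F x s))); auto.
Qed.

Lemma Integ_quotient f g k h a b : a <= b -> h <> 0 ->
  cont_on f a b -> cont_on g a b -> cont_on k a b ->
  (Integ g a b - Integ f a b) / h - Integ k a b = Integ (fun x => (g x - f x) / h - k x) a b.
Proof.
  intros ab hh Cf Cg Ck.
  assert (Cgf : cont_on (fun x => g x - f x) a b)
    by (intros x Hx; apply (continuity_pt_minus g f); auto).
  assert (Cq : cont_on (fun x => / h * (g x - f x)) a b)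
    by (intros x Hx; apply (continuity_pt_scal (fun x => g x - f x)); auto).
  rewrite <- Integ_minus by auto. unfold Rdiv. rewrite Rmult_comm, <- Integ_scal by auto.
  rewrite <- Integ_minus by auto.
  apply Integ_ext; auto; intros; field; auto.
Qed.

(* Pointwise step of the parametric differentiation: by the Cauchy-Riemann equation
   d/ds Re F = - Im dF and the Lipschitz bound on dF, the difference quotient in s of
   Re F is within L |h| of - Im dF, uniformly for x in a compact set. *)
Lemma hol_quotient_close sg F dF R0 : hol sg F dF -> 0 <= R0 ->
  exists L, 0 <= L /\ forall x s0 h, Rabs x <= R0 -> Rabs s0 < sg -> Rabs (s0 + h) < sg -> h <> 0 ->
    Rabs ((fst (F x (s0 + h)) - fst (F x s0)) / h + snd (dF x s0)) <= L * Rabs h.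
Proof.
  intros [_ [[_ D2] HF]] HR.
  destruct (D2 R0 HR) as [M [L [HL HD]]].
  exists L; split; auto. intros x s0 h hx hs0 hsh hh.
  assert (Hbetween : forall c, Rmin s0 (s0 + h) <= c <= Rmax s0 (s0 + h) ->
            Rabs (c - s0) <= Rabs h /\ Rabs c < sg).
  { intros c Hc. apply Rabs_def2 in hs0; apply Rabs_def2 in hsh.
    destruct (Rle_dec s0 (s0 + h)).
    - rewrite Rmin_left, Rmax_right in Hc by lra.
      split; [apply Rabs_le; split_Rabs|apply Rabs_def1]; lra.
    - rewrite Rmin_right, Rmax_left in Hc by lra.
      split; [apply Rabs_le; split_Rabs|apply Rabs_def1]; lra. }
  destruct (mvt_any (fun r => fst (F x r)) (fun r => - snd (dF x r)) s0 (s0 + h)) as [c [Hc Hc2]].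
  { intros c Hc. apply HF. apply Hbetween; auto. }
  destruct (Hbetween c Hc) as [Hcs Hc'].
  rewrite Hc2. replace (s0 + h - s0) with h by ring.
  replace (- snd (dF x c) * h / h + snd (dF x s0)) with (- (snd (dF x c) - snd (dF x s0))) by (field; auto).
  rewrite Rabs_Ropp.
  destruct (HD x c x s0 hx ltac:(lra) hx ltac:(lra)) as [_ B].
  replace (x - x) with 0 in B by ring. rewrite Rabs_R0, Rplus_0_l in B.
  eapply Rle_trans; [apply B|]. apply Rmult_le_compat_l; auto.
Qed.

(* Differentiation under the integral sign: for F holomorphic on the strip,
   d/ds int_a^b Re F(x, s) dx = - (Im F(b, s) - Im F(a, s)), the integrand - Im dF being
   the x-derivative of - Im F. *)
Lemma hol_param_deriv sg F dF a b s0 : hol sg F dF -> a <= b -> Rabs s0 < sg ->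
  derivable_pt_lim (fun s => Integ (fun x => fst (F x s)) a b) s0
     (- (snd (F b s0) - snd (F a s0))).
Proof.
  intros HH ab hs0. pose proof HH as [[F1 _] [[_ D2] HF]].
  set (R0 := Rabs a + Rabs b).
  assert (HR0 : 0 <= R0) by (unfold R0; pose proof (Rabs_pos a); pose proof (Rabs_pos b); lra).
  destruct (hol_quotient_close sg F dF R0 HH HR0) as [L [HL HQ]].
  assert (CF : forall s, Rabs s <= sg -> cont_on (fun x => fst (F x s)) a b)
    by (intros s hs x _; apply (lip_strip_cont sg (fun x s => fst (F x s))); auto).
  assert (CD : cont_on (fun x => - snd (dF x s0)) a b).
  { intros x _; apply (continuity_pt_opp (fun x => snd (dF x s0))).
    apply (lip_strip_cont sg (fun x s => snd (dF x s))); auto; lra. }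
  assert (Ht : - (snd (F b s0) - snd (F a s0)) = Integ (fun x => - snd (dF x s0)) a b).
  { rewrite (Integ_FTC (fun x => - snd (dF x s0)) (fun x => - snd (F x s0)) a b ab CD).
    - ring.
    - intros c Hc. apply d_opp. apply (HF c s0 hs0). }
  rewrite Ht. intros eps Heps.
  set (del := Rmin (sg - Rabs s0) (eps / (L * (b - a) + 1))).
  assert (Hdel : 0 < del) by (apply Rmin_pos; [lra|apply Rdiv_lt_0_compat; [lra|nra]]).
  exists (mkposreal del Hdel). intros h hn hh. simpl in hh.
  assert (hh1 : Rabs h < sg - Rabs s0) by (eapply Rlt_le_trans; [apply hh|apply Rmin_l]).
  assert (hh2 : Rabs h < eps / (L * (b - a) + 1)) by (eapply Rlt_le_trans; [apply hh|apply Rmin_r]).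
  assert (hsh : Rabs (s0 + h) < sg) by (eapply Rle_lt_trans; [apply Rabs_triang|lra]).
  pose proof (CF s0 ltac:(lra)) as CF0. pose proof (CF (s0 + h) ltac:(lra)) as CFh.
  rewrite Integ_quotient by auto.
  eapply Rle_lt_trans.
  - apply (Integ_bound _ a b (L * Rabs h)); auto.
    + intros x Hx. apply (continuity_pt_minus _ (fun x => - snd (dF x s0))); [|apply CD; auto].
      apply (continuity_pt_div (fun x => fst (F x (s0 + h)) - fst (F x s0)) (fun _ => h)); auto.
      * apply (continuity_pt_minus (fun x => fst (F x (s0 + h))) (fun x => fst (F x s0)));
          [apply CFh|apply CF0]; auto.
      * apply continuity_pt_const; intros u v; auto.
    + intros x Hx. replace (_ - - snd (dF x s0)) with
        ((fst (F x (s0 + h)) - fst (F x s0)) / h + snd (dF x s0)) by ring.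
      apply HQ; auto. unfold R0; apply Rabs_le; split_Rabs; lra.
  - assert (L * Rabs h * (b - a) <= (L * (b - a) + 1) * Rabs h) by (pose proof (Rabs_pos h); nra).
    assert ((L * (b - a) + 1) * Rabs h < eps).
    { apply (Rmult_lt_compat_l (L * (b - a) + 1)) in hh2; [|nra].
      unfold Rdiv in hh2. rewrite <- Rmult_assoc, (Rmult_comm _ eps), Rmult_assoc, Rinv_r, Rmult_1_r in hh2 by nra.
      lra. }
    lra.
Qed.

(* Contour shift (Cauchy's theorem on a rectangle, in mean-value form): raising the segment
   [a, b] to height sig changes the integral of Re F by the vertical sides, evaluated at
   some intermediate height c. *)
Lemma contour_shift sg F dF a b sig : hol sg F dF -> a <= b -> 0 <= sig < sg ->
  exists c, 0 <= c <= sig /\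
    Integ (fun x => fst (F x sig)) a b - Integ (fun x => fst (F x 0)) a b
      = - sig * (snd (F b c) - snd (F a c)).
Proof.
  intros HH ab hs.
  destruct (mvt_any (fun s => Integ (fun x => fst (F x s)) a b)
              (fun s => - (snd (F b s) - snd (F a s))) 0 sig) as [c [Hc Hc2]].
  - intros c Hc. rewrite Rmin_left, Rmax_right in Hc by lra. apply (hol_param_deriv sg F dF); auto.
    rewrite Rabs_pos_eq; lra.
  - rewrite Rmin_left, Rmax_right in Hc by lra. exists c; split; auto. rewrite Hc2. ring.
Qed.
(* The l1 norm |Re z| + |Im z|: submultiplicative and within a factor 2 of the modulus. *)
Definition cnorm1 (z : R * R) : R := Rabs (fst z) + Rabs (snd z).

Lemma cnorm1_pos z : 0 <= cnorm1 z.
Proof. unfold cnorm1; pose proof (Rabs_pos (fst z)); pose proof (Rabs_pos (snd z)); lra. Qed.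

Lemma cnorm1_fst z : Rabs (fst z) <= cnorm1 z.
Proof. unfold cnorm1; pose proof (Rabs_pos (snd z)); lra. Qed.
Lemma cnorm1_snd z : Rabs (snd z) <= cnorm1 z.
Proof. unfold cnorm1; pose proof (Rabs_pos (fst z)); lra. Qed.

Lemma cnorm1_mul z w : cnorm1 (Cmul z w) <= cnorm1 z * cnorm1 w.
Proof.
  unfold cnorm1, Cmul; simpl.
  destruct z as [x y]; destruct w as [u v]; simpl.
  pose proof (Rabs_triang (x*u) (- (y*v))). pose proof (Rabs_triang (x*v) (y*u)).
  unfold Rminus. rewrite !Rabs_mult, Rabs_Ropp, Rabs_mult in *.
  eapply Rle_trans. apply Rplus_le_compat; eauto. ring_simplify. lra.
Qed.

Lemma cnorm1_pow z n : cnorm1 (Cpow z n) <= cnorm1 z ^ n.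
Proof.
  induction n; simpl.
  - unfold cnorm1; simpl; rewrite Rabs_R1, Rabs_R0; lra.
  - eapply Rle_trans; [apply cnorm1_mul|]. apply Rmult_le_compat_l; auto. apply cnorm1_pos.
Qed.

Lemma Cpow_real r n : Cpow (r, 0) n = (r ^ n, 0).
Proof.
  induction n; simpl; auto. rewrite IHn. unfold Cmul; simpl. f_equal; ring.
Qed.
Lemma cnorm1_add z w : cnorm1 (Cadd z w) <= cnorm1 z + cnorm1 w.
Proof.
  unfold cnorm1, Cadd; simpl. pose proof (Rabs_triang (fst z) (fst w)); pose proof (Rabs_triang (snd z) (snd w)); lra.
Qed.

(* |u| / D <= 1/2 + 1/(2m) when u^2 <= D and D >= m > 0 (since |u| <= (D + 1) / 2). *)
Lemma half_bound u D m : 0 < m <= D -> u * u <= D -> Rabs (u * / D) <= 1/2 + 1/(2*m).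
Proof.
  intros [hm hD] hu.
  rewrite Rabs_mult, Rabs_inv, (Rabs_pos_eq D) by lra.
  assert (Rabs u <= (D + 1) / 2).
  { assert (Rabs u * Rabs u = u * u) by (rewrite <- Rabs_mult; apply Rabs_pos_eq; nra).
    pose proof (Rle_0_sqr (Rabs u - 1)) as hq. unfold Rsqr in hq. nra. }
  assert (0 < / D) by (apply Rinv_0_lt_compat; lra).
  apply Rle_trans with ((D + 1) / 2 * / D).
  { apply Rmult_le_compat_r; lra. }
  replace ((D + 1) / 2 * / D) with (1/2 + 1/(2*D)) by (field; lra).
  assert (1/(2*D) <= 1/(2*m)).
  { unfold Rdiv; rewrite !Rmult_1_l. apply Rinv_le_contravar; lra. }
  lra.
Qed.

Lemma cnorm1_Cinv w m : 0 < m <= Cnsq w -> cnorm1 (Cinv w) <= 2 + 1 / m.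
Proof.
  intros H. unfold cnorm1, Cinv; simpl.
  assert (fst w * fst w <= Cnsq w) by (unfold Cnsq; nra).
  assert (- snd w * - snd w <= Cnsq w) by (unfold Cnsq; nra).
  pose proof (half_bound (fst w) (Cnsq w) m H ltac:(auto)).
  pose proof (half_bound (- snd w) (Cnsq w) m H ltac:(auto)).
  replace (1 / m) with (2 * (1 / (2 * m))) by (field; lra). lra.
Qed.

Lemma cnorm1_Cnorm z : cnorm1 z <= 2 * Cnorm z.
Proof.
  unfold cnorm1, Cnorm.
  assert (Rabs (fst z) <= sqrt (fst z * fst z + snd z * snd z)).
  { rewrite <- sqrt_Rsqr_abs. apply sqrt_le_1_alt. unfold Rsqr; nra. }
  assert (Rabs (snd z) <= sqrt (fst z * fst z + snd z * snd z)).
  { rewrite <- sqrt_Rsqr_abs. apply sqrt_le_1_alt. unfold Rsqr; nra. }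
  lra.
Qed.

Lemma cnorm1_mul4 z1 z2 z3 z4 : cnorm1 (Cmul z1 (Cmul z2 (Cmul z3 z4))) <= cnorm1 z1 * cnorm1 z2 * cnorm1 z3 * cnorm1 z4.
Proof.
  pose proof (cnorm1_pos z1); pose proof (cnorm1_pos z2); pose proof (cnorm1_pos z3); pose proof (cnorm1_pos z4).
  eapply Rle_trans; [apply cnorm1_mul|]. rewrite !Rmult_assoc. apply Rmult_le_compat_l; auto.
  eapply Rle_trans; [apply cnorm1_mul|]. apply Rmult_le_compat_l; auto.
  apply cnorm1_mul.
Qed.

Definition Csub (z w : R * R) : R * R := (fst z - fst w, snd z - snd w).

Lemma Cexp0_bound alpha x s : cnorm1 (Cexp 0 alpha x s) <= 2 * exp (- alpha * s).
Proof.
  unfold cnorm1, Cexp; simpl. rewrite !Rabs_mult, Rabs_pos_eq by (left; apply exp_pos).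
  replace (0 * x - alpha * s) with (- alpha * s) by ring.
  assert (Rabs (cos (alpha * x + 0 * s)) <= 1) by (apply Rabs_le; apply COS_bound).
  assert (Rabs (sin (alpha * x + 0 * s)) <= 1) by (apply Rabs_le; apply SIN_bound).
  pose proof (exp_pos (- alpha * s)). nra.
Qed.

Lemma cont_Cmul (P Q : R -> R * R) x :
  continuity_pt (fun y => fst (P y)) x -> continuity_pt (fun y => snd (P y)) x ->
  continuity_pt (fun y => fst (Q y)) x -> continuity_pt (fun y => snd (Q y)) x ->
  continuity_pt (fun y => fst (Cmul (P y) (Q y))) x /\ continuity_pt (fun y => snd (Cmul (P y) (Q y))) x.
Proof.
  intros; unfold Cmul; simpl; split.
  - apply (continuity_pt_minus (fun y => fst (P y) * fst (Q y)) (fun y => snd (P y) * snd (Q y)));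
    apply (continuity_pt_mult (fun y => _ (P y)) (fun y => _ (Q y))); auto.
  - apply (continuity_pt_plus (fun y => fst (P y) * snd (Q y)) (fun y => snd (P y) * fst (Q y)));
    apply (continuity_pt_mult (fun y => _ (P y)) (fun y => _ (Q y))); auto.
Qed.

Lemma Csub_mul4 z t k1 k2 e :
  Csub (Cmul z (Cmul t (Cmul k1 e))) (Cmul z (Cmul t (Cmul k2 e))) = Cmul z (Cmul t (Cmul (Csub k1 k2) e)).
Proof.
  destruct z, t, k1, k2, e. unfold Csub, Cmul; simpl. f_equal; ring.
Qed.

Lemma cnorm1_sub_bound z w d : Rabs (fst z - fst w) <= d -> Rabs (snd z - snd w) <= d -> cnorm1 (Csub z w) <= 2 * d.
Proof. unfold cnorm1, Csub; simpl; lra. Qed.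

Lemma lim_le (u : nat -> R) l c B N : Un_cv u l -> (forall m, (N <= m)%nat -> Rabs (u m - c) <= B) ->
  Rabs (l - c) <= B.
Proof.
  intros Hu Hb. destruct (Rle_dec (Rabs (l - c)) B) as [h|h]; auto. exfalso.
  destruct (Hu (Rabs (l - c) - B) ltac:(lra)) as [N1 HN1].
  specialize (HN1 (max N N1) ltac:(lia)). specialize (Hb (max N N1) ltac:(lia)).
  unfold R_dist in HN1.
  pose proof (Rabs_triang (u (max N N1) - c) (l - u (max N N1))).
  replace (u (max N N1) - c + (l - u (max N N1))) with (l - c) in H by ring.
  rewrite <- Rabs_Ropp in HN1. replace (- (u (max N N1) - l)) with (l - u (max N N1)) in HN1 by ring.
  lra.
Qed.

Lemma tail_bound (t : nat -> R) N1 : (forall n, (N1 < n)%nat -> Rabs (t n) <= (1/2) ^ n) ->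
  forall N d, (N1 <= N)%nat -> Rabs (sum_f_R0 t (N + d) - sum_f_R0 t N) <= (1/2) ^ N - (1/2) ^ (N + d).
Proof.
  intros Ht N d HN. induction d.
  - rewrite Nat.add_0_r. replace (sum_f_R0 t N - sum_f_R0 t N) with 0 by ring. rewrite Rabs_R0; lra.
  - replace (N + S d)%nat with (S (N + d)) by lia. simpl sum_f_R0.
    replace (sum_f_R0 t (N + d) + t (S (N + d)) - sum_f_R0 t N) with
      ((sum_f_R0 t (N + d) - sum_f_R0 t N) + t (S (N + d))) by ring.
    eapply Rle_trans; [apply Rabs_triang|].
    pose proof (Ht (S (N + d)) ltac:(lia)).
    simpl pow in *. lra.
Qed.

Lemma terms_small (b : nat -> R) l : Un_cv (fun N => sum_f_R0 b N) l ->
  exists N1, forall n, (N1 < n)%nat -> Rabs (b n) <= 1.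
Proof.
  intros Hu. destruct (Hu (1/2) ltac:(lra)) as [N1 HN1]. exists N1. intros n Hn.
  destruct n; [lia|]. pose proof (HN1 (S n) ltac:(lia)); pose proof (HN1 n ltac:(lia)).
  unfold R_dist in *. simpl sum_f_R0 in H.
  replace (b (S n)) with ((sum_f_R0 b n + b (S n) - l) - (sum_f_R0 b n - l)) by ring.
  eapply Rle_trans; [apply Rabs_triang|]. rewrite Rabs_Ropp. lra.
Qed.

(* Truncations of an everywhere convergent power series sum a_n z^n converge to its sum
   kc uniformly on compact sets: convergence at the real point 2 R0 + 1 bounds the
   coefficients, and the tail on |z| <= R0 is then geometric with ratio 1/2. *)
Section PowerSeries.
Variable a : nat -> R.
Variable kc : R * R -> R * R.
Hypothesis Hconv : forall z : R * R,
  Un_cv (fun N => sum_f_R0 (fun n => a n * fst (Cpow z n)) N) (fst (kc z)) /\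
  Un_cv (fun N => sum_f_R0 (fun n => a n * snd (Cpow z n)) N) (snd (kc z)).

Definition partial_sum (N : nat) (z : R * R) : R * R :=
  (sum_f_R0 (fun n => a n * fst (Cpow z n)) N, sum_f_R0 (fun n => a n * snd (Cpow z n)) N).

Lemma partial_sum_unif R0 del : 0 <= R0 -> 0 < del -> exists N0, forall N z, (N0 <= N)%nat -> cnorm1 z <= R0 ->
  Rabs (fst (kc z) - fst (partial_sum N z)) <= del /\ Rabs (snd (kc z) - snd (partial_sum N z)) <= del.
Proof.
  intros HR Hd.
  set (rho := 2 * R0 + 1).
  destruct (Hconv (rho, 0)) as [Hc _].
  destruct (terms_small _ _ Hc) as [N1 HN1].
  destruct (pow_lt_1_zero (1/2) ltac:(rewrite Rabs_pos_eq; lra) del Hd) as [N2 HN2].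
  exists (max N1 N2). intros N z HN Hz.
  assert (Ht : forall (pr : R * R -> R), (forall w, Rabs (pr w) <= cnorm1 w) ->
     forall n, (N1 < n)%nat -> Rabs (a n * pr (Cpow z n)) <= (1/2) ^ n).
  { intros pr Hpr n Hn. specialize (HN1 n Hn). rewrite Cpow_real in HN1. simpl in HN1.
    rewrite Rabs_mult in *. rewrite (Rabs_pos_eq (rho ^ n)) in HN1 by (apply pow_le; unfold rho; lra).
    assert (Rabs (pr (Cpow z n)) <= (rho / 2) ^ n).
    { eapply Rle_trans; [apply Hpr|]. eapply Rle_trans; [apply cnorm1_pow|].
      apply pow_incr. split; [apply cnorm1_pos|]. unfold rho; lra. }
    replace ((1/2)^n) with (Rabs (a n) * rho ^ n * (1/2)^n + (1 - Rabs (a n) * rho ^ n) * (1/2)^n) by ring.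
    assert (0 <= (1 - Rabs (a n) * rho ^ n) * (1/2)^n) by (apply Rmult_le_pos; [lra|apply pow_le; lra]).
    replace (Rabs (a n) * rho ^ n * (1 / 2) ^ n) with (Rabs (a n) * (rho / 2) ^ n).
    2: { replace (rho / 2) with (rho * (1/2)) by field. rewrite Rpow_mult_distr. ring. }
    assert (Rabs (a n) * Rabs (pr (Cpow z n)) <= Rabs (a n) * (rho / 2) ^ n)
      by (apply Rmult_le_compat_l; auto; apply Rabs_pos).
    lra. }
  assert (Hb : forall (pr : R * R -> R) (L : R), (forall w, Rabs (pr w) <= cnorm1 w) ->
     Un_cv (fun N => sum_f_R0 (fun n => a n * pr (Cpow z n)) N) L ->
     Rabs (L - sum_f_R0 (fun n => a n * pr (Cpow z n)) N) <= del).
  { intros pr L Hpr HL.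
    eapply Rle_trans. apply (lim_le _ _ _ ((1/2)^N) N HL).
    - intros m Hm. replace m with (N + (m - N))%nat by lia.
      eapply Rle_trans. apply (tail_bound _ N1 (Ht pr Hpr) N (m - N)); lia.
      pose proof (pow_le (1/2) (N + (m-N)) ltac:(lra)); lra.
    - specialize (HN2 N ltac:(lia)). rewrite Rabs_pos_eq in HN2 by (apply pow_le; lra). lra. }
  destruct (Hconv z) as [H1 H2]. unfold partial_sum; simpl.
  split; [apply (Hb fst)|apply (Hb snd)]; auto; [apply cnorm1_fst|apply cnorm1_snd].
Qed.

End PowerSeries.

Lemma holo_partial_sum sg a tau N : holo sg (fun x s => partial_sum a N (x - tau, s)).
Proof.
  induction N.
  - apply (holo_ext sg (fun x s => Cmul (a 0%nat, 0) (Cpow (x - tau, s) 0))).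
    + intros; unfold partial_sum, Cmul; simpl; f_equal; ring.
    + apply holo_mul; [apply holo_const|apply holo_pow].
  - apply (holo_ext sg (fun x s => Cadd (partial_sum a N (x - tau, s)) (Cmul (a (S N), 0) (Cpow (x - tau, s) (S N))))).
    + intros; unfold partial_sum, Cmul, Cadd; simpl; f_equal; ring.
    + apply holo_add; auto. apply holo_mul; [apply holo_const|apply holo_pow].
Qed.

Lemma cont_of_unif_approx (f : R -> R) x :
  (forall del, 0 < del -> exists g, continuity_pt g x /\ forall y, Rabs (y - x) <= 1 -> Rabs (f y - g y) <= del) ->
  continuity_pt f x.
Proof.
  intros H eps Heps. destruct (H (eps / 3) ltac:(lra)) as [g [Hg Hfg]].
  destruct (Hg (eps / 3) ltac:(lra)) as [d [Hd Hd2]].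
  exists (Rmin d 1). split; [apply Rmin_pos; lra|].
  intros y [_ hy]. simpl in *. unfold R_dist in *.
  assert (hy1 : Rabs (y - x) < d) by (eapply Rlt_le_trans; [apply hy|apply Rmin_l]).
  assert (hy2 : Rabs (y - x) < 1) by (eapply Rlt_le_trans; [apply hy|apply Rmin_r]).
  assert (Hgg : Rabs (g y - g x) < eps / 3).
  { destruct (Req_dec y x) as [e|ne].
    + subst; replace (g x - g x) with 0 by ring; rewrite Rabs_R0; lra.
    + apply Hd2; split; [split; [exact I|auto]|simpl; unfold R_dist; lra]. }
  pose proof (Hfg y ltac:(lra)) as A1.
  pose proof (Hfg x ltac:(replace (x - x) with 0 by ring; rewrite Rabs_R0; lra)) as A2.
  replace (f y - f x) with ((f y - g y) + ((g y - g x) + - (f x - g x))) by ring.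
  pose proof (Rabs_triang (f y - g y) ((g y - g x) + - (f x - g x))).
  pose proof (Rabs_triang (g y - g x) (- (f x - g x))). rewrite Rabs_Ropp in *.
  lra.
Qed.

Lemma d_atan_shift c tau x : derivable_pt_lim (fun y => c * atan (y - tau)) x (c / (1 + (x - tau) ^ 2)).
Proof.
  eapply dlim_eq.
  - apply d_mul; [apply d_const|].
    apply (derivable_pt_lim_comp (fun y => y - tau) atan x 1).
    + eapply dlim_eq; [apply d_minus; [apply d_id|apply d_const]|ring].
    + apply derivable_pt_lim_atan.
  - cbv beta. unfold Rdiv. ring.
Qed.

Lemma lorentz_den_pos u : 0 < 1 + u ^ 2.
Proof. pose proof (pow2_ge_0 u); lra. Qed.

Lemma lorentz_cont c tau x : continuity_pt (fun y => c / (1 + (y - tau) ^ 2)) x.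
Proof.
  assert (D : derivable_pt_lim (fun y => 1 + (y - tau) ^ 2) x (2 * (x - tau))).
  { apply (dlim_ext (fun y => 1 + (y - tau) * (y - tau))); [intros; ring|].
    eapply dlim_eq; [apply d_plus; [apply d_const|apply d_mul; apply d_minus; [apply d_id|apply d_const|apply d_id|apply d_const]]|].
    cbv beta; ring. }
  apply (continuity_pt_div (fun _ => c) (fun y => 1 + (y - tau) ^ 2)).
  - apply continuity_pt_const; intros u v; auto.
  - apply derivable_continuous_pt. exists (2 * (x - tau)); exact D.
  - pose proof (lorentz_den_pos (x - tau)); lra.
Qed.

Lemma Integ_lorentz c tau A B : A <= B ->
  Integ (fun x => c / (1 + (x - tau) ^ 2)) A B = c * (atan (B - tau) - atan (A - tau)).
Proof.
  intros AB. rewrite (Integ_FTC _ (fun y => c * atan (y - tau))); auto.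
  - ring.
  - intros x _; apply lorentz_cont.
  - intros; apply d_atan_shift.
Qed.

Lemma atan_le_id z : 0 <= z -> atan z <= z.
Proof.
  intros hz. destruct (Req_dec z 0) as [e|e]; [subst; rewrite atan_0; lra|].
  destruct (MVT_cor2 atan (fun x => / (1 + x ^ 2)) 0 z ltac:(lra)) as [c [Hc Hc2]].
  { intros; apply derivable_pt_lim_atan. }
  rewrite atan_0 in Hc. rewrite Rminus_0_r in *.
  assert (/ (1 + c ^ 2) <= 1).
  { rewrite <- Rinv_1. apply Rinv_le_contravar; [lra|]. pose proof (pow2_ge_0 c); lra. }
  assert (0 < / (1 + c ^ 2)) by (apply Rinv_0_lt_compat, lorentz_den_pos). nra.
Qed.

Lemma atan_tail y : 0 < y -> PI / 2 - atan y <= / y.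
Proof.
  intros hy. rewrite <- atan_inv by auto. apply atan_le_id. left; apply Rinv_0_lt_compat; auto.
Qed.

Lemma lorentz_tail_small K tau e : 0 <= K -> 0 < e ->
  forall x, K / e + 1 <= Rabs (x - tau) -> K / (1 + (x - tau) ^ 2) <= e.
Proof.
  intros HK he x hx. set (y := Rabs (x - tau)) in *.
  assert (0 <= K / e) by (unfold Rdiv; apply Rmult_le_pos; [lra|left; apply Rinv_0_lt_compat; lra]).
  replace ((x - tau) ^ 2) with (y ^ 2) by (unfold y; apply pow2_abs).
  apply Rle_trans with (K / y).
  - unfold Rdiv. apply Rmult_le_compat_l; auto. apply Rinv_le_contravar; nra.
  - apply (Rmult_le_reg_r y); [lra|]. unfold Rdiv. rewrite Rmult_assoc, Rinv_l by lra.
    assert (K / e * e = K) by (field; lra). nra.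
Qed.

(* A continuous function with a Lorentzian bound |f x| <= K / (1 + (x - tau)^2) has an
   improper integral over R: its integrals over [-n, n] form a Cauchy sequence, the tails
   being controlled by arctan. *)
Section ImproperIntegral.
Variables (f : R -> R) (tau K : R).
Hypothesis Hf : forall x, continuity_pt f x.
Hypothesis HK : 0 <= K.
Hypothesis Hf_lorentz : forall x, Rabs (f x) <= K / (1 + (x - tau) ^ 2).

Lemma f_cont_on a b : cont_on f a b.
Proof. intros x _; apply Hf. Qed.

Lemma tail_int p q : p <= q -> Rabs (Integ f p q) <= K * (atan (q - tau) - atan (p - tau)).
Proof.
  intros pq. rewrite <- Integ_lorentz by auto. apply Integ_abs_le; auto.
  - apply f_cont_on.
  - intros x _; apply lorentz_cont.
Qed.

Lemma tail_right p q M : p <= q -> Rabs tau < M -> M <= p -> Rabs (Integ f p q) <= K / (M - Rabs tau).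
Proof.
  intros pq hM hp. eapply Rle_trans; [apply tail_int; auto|].
  pose proof (atan_bound (q - tau)).
  assert (hpt : M - Rabs tau <= p - tau) by (pose proof (Rle_abs tau); lra).
  pose proof (atan_tail (p - tau) ltac:(lra)).
  assert (/ (p - tau) <= / (M - Rabs tau)) by (apply Rinv_le_contravar; lra).
  unfold Rdiv. apply Rmult_le_compat_l; auto. lra.
Qed.

Lemma tail_left p q M : p <= q -> Rabs tau < M -> q <= - M -> Rabs (Integ f p q) <= K / (M - Rabs tau).
Proof.
  intros pq hM hq. eapply Rle_trans; [apply tail_int; auto|].
  pose proof (atan_bound (p - tau)).
  assert (hpt : M - Rabs tau <= tau - q) by (pose proof (Rle_abs (- tau)); rewrite Rabs_Ropp in *; lra).
  pose proof (atan_tail (tau - q) ltac:(lra)).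
  replace (atan (q - tau)) with (- atan (tau - q)) by (rewrite <- atan_opp; f_equal; ring).
  assert (/ (tau - q) <= / (M - Rabs tau)) by (apply Rinv_le_contravar; lra).
  unfold Rdiv. apply Rmult_le_compat_l; auto. lra.
Qed.

Lemma tails a b n M : Rabs tau < M -> - INR n <= a -> a <= - M -> M <= b -> b <= INR n ->
  Rabs (Integ f a b - Integ f (- INR n) (INR n)) <= 2 * (K / (M - Rabs tau)).
Proof.
  intros hM h1 h2 h3 h4. pose proof (Rabs_pos tau).
  rewrite <- (Integ_split f (- INR n) a (INR n)) by first [lra | apply f_cont_on].
  rewrite <- (Integ_split f a b (INR n)) by first [lra | apply f_cont_on].
  replace (Integ f a b - (Integ f (- INR n) a + (Integ f a b + Integ f b (INR n))))
    with (- (Integ f (- INR n) a + Integ f b (INR n))) by ring.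
  rewrite Rabs_Ropp. eapply Rle_trans; [apply Rabs_triang|].
  pose proof (tail_left (- INR n) a M h1 hM h2). pose proof (tail_right b (INR n) M h4 hM h3). lra.
Qed.

Lemma tails_small eps : 0 < eps -> exists M, 0 <= M /\ Rabs tau < M /\ 2 * (K / (M - Rabs tau)) < eps.
Proof.
  intros he. exists (Rabs tau + 2 * K / eps + 1). pose proof (Rabs_pos tau).
  assert (0 <= 2 * K / eps) by (unfold Rdiv; apply Rmult_le_pos; [lra|left; apply Rinv_0_lt_compat; lra]).
  repeat split; try lra.
  replace (Rabs tau + 2 * K / eps + 1 - Rabs tau) with (2 * K / eps + 1) by ring.
  apply (Rmult_lt_reg_r (2 * K / eps + 1)); [lra|].
  replace (2 * (K / (2 * K / eps + 1)) * (2 * K / eps + 1)) with (2 * K) by (field; lra).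
  replace (eps * (2 * K / eps + 1)) with (2 * K + eps) by (field; lra). lra.
Qed.

Definition sym_integral (n : nat) := Integ f (- INR n) (INR n).

Lemma sym_integral_cauchy : Cauchy_crit sym_integral.
Proof.
  intros eps he. destruct (tails_small eps he) as [M [hM0 [hM hME]]].
  destruct (INR_unbounded M) as [N HN]. exists N. intros n m hn hm.
  unfold R_dist, sym_integral.
  assert (Hn : M <= INR n) by (apply le_INR in hn; lra).
  assert (Hm : M <= INR m) by (apply le_INR in hm; lra).
  destruct (Rle_dec (INR n) (INR m)).
  - eapply Rle_lt_trans; [|apply hME]. apply tails; lra.
  - rewrite Rabs_minus_sym. eapply Rle_lt_trans; [|apply hME]. apply tails; lra.
Qed.

Lemma f_integrable : forall a b, Riemann_integrable f a b.
Proof.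
  intros a b. destruct (Rle_dec a b).
  - apply cont_on_int; auto; apply f_cont_on.
  - apply RiemannInt_P1. apply cont_on_int; [lra|apply f_cont_on].
Qed.

Lemma improper_integral_exists : exists I, is_int_R f I /\
  forall eps, 0 < eps -> exists M, 0 <= M /\ forall a b, a <= - M -> M <= b -> Rabs (Integ f a b - I) < eps.
Proof.
  destruct (R_complete sym_integral sym_integral_cauchy) as [l Hl].
  assert (Main : forall eps, 0 < eps -> exists M, 0 <= M /\ forall a b, a <= - M -> M <= b -> Rabs (Integ f a b - l) < eps).
  { intros eps he. destruct (tails_small (eps / 2) ltac:(lra)) as [M [hM0 [hM hME]]].
    exists M. split; auto. intros a b ha hb.
    destruct (Hl (eps / 2) ltac:(lra)) as [N1 HN1].
    destruct (INR_unbounded (Rabs a + Rabs b)) as [N2 HN2].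
    set (n := max N1 N2).
    assert (hn : Rabs a + Rabs b <= INR n) by (assert (INR N2 <= INR n) by (apply le_INR; lia); lra).
    pose proof (HN1 n ltac:(lia)). unfold R_dist, sym_integral in H.
    pose proof (tails a b n M hM ltac:(split_Rabs; pose proof (Rabs_pos b); lra) ha hb
                  ltac:(split_Rabs; pose proof (Rabs_pos a); lra)).
    replace (Integ f a b - l) with ((Integ f a b - Integ f (- INR n) (INR n)) + (Integ f (- INR n) (INR n) - l)) by ring.
    eapply Rle_lt_trans; [apply Rabs_triang|]. lra. }
  exists l. split; auto.
  exists f_integrable. intros eps he. destruct (Main eps he) as [M [hM HM]]. exists M.
  intros a b ha hb. rewrite <- (Integ_eq _ _ _ (f_integrable a b)). apply HM; auto.
Qed.

Lemma improper_integral_bound X K' : 0 <= K' ->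
  (forall A B, A <= B -> Rabs (Integ f A B) <= X + K' / (1 + (A - tau) ^ 2) + K' / (1 + (B - tau) ^ 2)) ->
  exists I, is_int_R f I /\ Rabs I <= X.
Proof.
  intros HK' HF. destruct improper_integral_exists as [I [HI HM]]. exists I. split; auto.
  apply Rle_plus_epsilon. intros eps he.
  destruct (HM (eps / 3) ltac:(lra)) as [M [hM0 HM']].
  set (R1 := K' / (eps / 3) + 1).
  assert (hR1 : 1 <= R1)
    by (unfold R1; assert (0 <= K' / (eps / 3)) by (unfold Rdiv; apply Rmult_le_pos; [lra|left; apply Rinv_0_lt_compat; lra]); lra).
  pose proof (Rabs_pos tau).
  set (b := M + Rabs tau + R1). set (a := - b).
  pose proof (lorentz_tail_small K' tau (eps / 3) HK' ltac:(lra)) as Hy. fold R1 in Hy.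
  assert (ha : a <= - M) by (unfold a, b; lra).
  assert (hb : M <= b) by (unfold b; lra).
  pose proof (HM' a b ha hb).
  pose proof (HF a b ltac:(lra)).
  pose proof (Rle_abs tau) as t1. pose proof (Rle_abs (- tau)) as t2. rewrite Rabs_Ropp in t2.
  assert (R1 <= Rabs (a - tau)).
  { unfold a, b. rewrite Rabs_left by lra. lra. }
  assert (R1 <= Rabs (b - tau)).
  { unfold b. rewrite Rabs_pos_eq by lra. lra. }
  pose proof (Hy a ltac:(auto)). pose proof (Hy b ltac:(auto)).
  replace I with (Integ f a b - (Integ f a b - I)) by ring.
  eapply Rle_trans; [apply Rabs_triang|]. rewrite Rabs_Ropp. lra.
Qed.

End ImproperIntegral.
Lemma exp_mono x y : x <= y -> exp x <= exp y.
Proof. intros h; destruct (Req_dec x y) as [e|e]; [subst; lra|left; apply exp_increasing; lra]. Qed.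

Lemma exp_neg_le1 alpha s : 0 <= alpha -> 0 <= s -> exp (- alpha * s) <= 1.
Proof. intros ha hs. rewrite <- exp_0. apply exp_mono. nra. Qed.

(* The integrand as a function on the strip |Im z| <= sg < 1/2, for a function kc given by
   the power series sum a_n z^n:
     integrand z = z tanh(pi z) kc(z - tau) e^{i alpha (z - tau)},
   with tanh(pi z) = 1 - 2 / (e^{2 pi z} + 1), and its polynomial truncations
   integrand_trunc N, obtained by replacing kc by the N-th partial sum.  The shifts x - 0
   let the generic lemmas hol_z and hol_exp apply verbatim. *)
Section Integrand.
Variables (a : nat -> R) (kc : R * R -> R * R) (tau alpha sg : R).
Hypothesis Hsg : 0 < sg < 1/2.

Definition cosh_den (x s : R) := Cadd (Cexp (2 * PI) 0 (x - 0) s) (1, 0).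
Definition ctanh (x s : R) := Cadd (1, 0) (Cmul (-2, 0) (Cinv (cosh_den x s))).
Definition cwave (x s : R) := Cexp 0 alpha (x - tau) s.
Definition cid (x s : R) := (x - 0, s).
Definition integrand_trunc N (x s : R) := Cmul (cid x s) (Cmul (ctanh x s) (Cmul (partial_sum a N (x - tau, s)) (cwave x s))).
Definition integrand (x s : R) := Cmul (cid x s) (Cmul (ctanh x s) (Cmul (kc (x - tau, s)) (cwave x s))).

(* |e^{2 pi z} + 1|^2 >= (1 + cos(2 pi sg)) / 2 > 0 on the strip, as sg < 1/2: this keeps
   tanh(pi z) holomorphic and bounded there. *)
Definition cos_sg := cos (2 * PI * sg).
Definition den_low := (1 + cos_sg) / 2.

Lemma cos_sg_prop : -1 < cos_sg /\ forall s, Rabs s <= sg -> cos_sg <= cos (2 * PI * s).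
Proof.
  pose proof PI_RGT_0. split.
  - unfold cos_sg. rewrite <- cos_PI. apply cos_decreasing_1; nra.
  - intros s hs. unfold cos_sg.
    assert (cos (2 * PI * s) = cos (2 * PI * Rabs s)).
    { destruct (Rle_dec 0 s). - rewrite Rabs_pos_eq; auto.
      - rewrite Rabs_left by lra. replace (2 * PI * - s) with (- (2 * PI * s)) by ring. rewrite cos_neg; auto. }
    rewrite H0. destruct (Req_dec (Rabs s) sg) as [e|ne]; [rewrite e; lra|].
    left. apply cos_decreasing_1; pose proof (Rabs_pos s); nra.
Qed.

Lemma den_low_pos : 0 < den_low.
Proof. unfold den_low; destruct cos_sg_prop; lra. Qed.

Lemma cosh_den_low x s : Rabs s <= sg -> den_low <= Cnsq (cosh_den x s).
Proof.
  intros hs. destruct cos_sg_prop as [h1 h2]. pose proof (h2 s hs) as hc.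
  unfold Cnsq, cosh_den, Cadd, Cexp; simpl.
  replace (0 * s) with 0 by ring. replace (0 * (x - 0)) with 0 by ring. rewrite !Rplus_0_l, Rminus_0_r.
  set (e := exp (2 * PI * (x - 0))). set (th := 2 * PI * s) in *.
  assert (he : 0 < e) by apply exp_pos.
  pose proof (sin2_cos2 th) as sc. unfold Rsqr in sc.
  pose proof (COS_bound th).
  unfold den_low.
  replace ((e * cos th + 1) * (e * cos th + 1) + (e * sin th + 0) * (e * sin th + 0))
    with (e * e * (sin th * sin th + cos th * cos th) + 2 * e * cos th + 1) by ring.
  rewrite sc. rewrite Rmult_1_r.
  assert (e * e + 2 * e * cos_sg + 1 <= e * e + 2 * e * cos th + 1) by nra.
  assert ((1 + cos_sg) / 2 <= e * e + 2 * e * cos_sg + 1).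
  { pose proof (Rle_0_sqr (e - 1)) as hsq; unfold Rsqr in hsq.
    assert (cos_sg <= 1) by (unfold cos_sg; apply COS_bound).
    assert (e * e + 1 >= 2 * e) by lra.
    assert (((1 - cos_sg) / 2) * (e * e + 1) >= ((1 - cos_sg) / 2) * (2 * e)) by (apply Rmult_ge_compat_l; lra).
    assert ((1 + cos_sg) * (e * e + 1) / 2 >= (1 + cos_sg) / 2) by nra.
    nra. }
  lra.
Qed.

Lemma holo_ctanh : holo sg ctanh.
Proof.
  unfold ctanh. apply (holo_add sg (fun _ _ => (1, 0))); [apply holo_const|].
  apply (holo_mul sg (fun _ _ => (-2, 0))); [apply holo_const|].
  assert (HW : holo sg cosh_den).
  { unfold cosh_den. apply (holo_add sg (fun x s => Cexp (2 * PI) 0 (x - 0) s)); [|apply holo_const].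
    eexists; apply hol_exp. }
  destruct HW as [dW HW]. eexists. apply (hol_inv sg cosh_den dW den_low den_low_pos HW). apply cosh_den_low.
Qed.

Lemma holo_trunc N : holo sg (integrand_trunc N).
Proof.
  unfold integrand_trunc. apply (holo_mul sg cid). { eexists; apply hol_z. }
  apply holo_mul; [apply holo_ctanh|]. apply holo_mul; [apply holo_partial_sum|].
  eexists; apply hol_exp.
Qed.

Variables (k : R -> R) (C2 : R).
Hypothesis Hconv : forall z : R * R,
  Un_cv (fun N => sum_f_R0 (fun n => a n * fst (Cpow z n)) N) (fst (kc z)) /\
  Un_cv (fun N => sum_f_R0 (fun n => a n * snd (Cpow z n)) N) (snd (kc z)).
Hypothesis Hk : forall x, kc (x, 0) = (k x, 0).
Hypothesis Hdec : forall x y, Rabs y <= 1 -> cnorm1 (kc (x, y)) <= C2 / (1 + Rabs x) ^ 3.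
Hypothesis Hal : 0 <= alpha.

(* tanh(pi z) is bounded by tanh_bound on the strip, hence the integrand by a Lorentzian
   of height lorentz_const = O(1 + |tau|) times e^{- alpha s}. *)
Definition tanh_bound := 5 + 2 / den_low.
Definition lorentz_const := 2 * tanh_bound * C2 * (1 + Rabs tau).
(* The integrand of the theorem, r tanh(pi r) K_alpha(r - tau) = 2 Re integrand(r). *)
Definition real_integrand (x : R) := x * tanh (PI * x) * Kalpha k alpha (x - tau).

Lemma C2_nonneg : 0 <= C2.
Proof.
  pose proof (Hdec 0 0 ltac:(rewrite Rabs_R0; lra)). pose proof (cnorm1_pos (kc (0, 0))).
  rewrite Rabs_R0, Rplus_0_r, pow1 in H. unfold Rdiv in H. rewrite Rinv_1 in H. lra.
Qed.

Lemma tanh_bound_pos : 0 < tanh_bound.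
Proof. unfold tanh_bound. pose proof den_low_pos. assert (0 < 2 / den_low) by (apply Rdiv_lt_0_compat; lra). lra. Qed.

Lemma ctanh_bound x s : Rabs s <= sg -> cnorm1 (ctanh x s) <= tanh_bound.
Proof.
  intros hs. unfold ctanh, tanh_bound.
  eapply Rle_trans; [apply cnorm1_add|].
  eapply Rle_trans; [apply Rplus_le_compat_l; apply cnorm1_mul|].
  pose proof (cnorm1_Cinv (cosh_den x s) den_low (conj den_low_pos (cosh_den_low x s hs))).
  assert (R2 : Rabs (-2) = 2) by (rewrite Rabs_left; lra).
  unfold cnorm1 at 1 2; simpl. rewrite Rabs_R1, Rabs_R0, R2.
  replace (2 / den_low) with (2 * (1 / den_low)) by (unfold Rdiv; ring). lra.
Qed.

Lemma cid_bound x s : Rabs s <= 1 -> cnorm1 (cid x s) <= (1 + Rabs tau) * (1 + Rabs (x - tau)).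
Proof.
  intros hs. unfold cnorm1, cid; simpl. rewrite Rminus_0_r.
  pose proof (Rabs_triang tau (x - tau)). replace (tau + (x - tau)) with x in H by ring.
  pose proof (Rabs_pos tau); pose proof (Rabs_pos (x - tau)). nra.
Qed.

Lemma cid_kc_bound x s : Rabs s <= 1 ->
  cnorm1 (cid x s) * cnorm1 (kc (x - tau, s)) <= (1 + Rabs tau) * C2 / (1 + (x - tau) ^ 2).
Proof.
  intros hs. pose proof (cid_bound x s hs) as Hz. pose proof (Hdec (x - tau) s hs) as Hd.
  set (d := Rabs (x - tau)) in *. assert (hd : 0 <= d) by apply Rabs_pos.
  pose proof (cnorm1_pos (cid x s)); pose proof (cnorm1_pos (kc (x - tau, s))).
  pose proof C2_nonneg.
  eapply Rle_trans. apply Rmult_le_compat; eauto.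
  replace ((1 + Rabs tau) * (1 + d) * (C2 / (1 + d) ^ 3)) with ((1 + Rabs tau) * C2 / ((1 + d) ^ 2)) by (field; lra).
  unfold Rdiv. apply Rmult_le_compat_l. { pose proof (Rabs_pos tau); nra. }
  apply Rinv_le_contravar. { apply lorentz_den_pos. }
  replace ((x - tau) ^ 2) with (d ^ 2) by (unfold d; apply pow2_abs). nra.
Qed.

Lemma integrand_bound x s : 0 <= s <= sg ->
  cnorm1 (integrand x s) <= lorentz_const * exp (- alpha * s) / (1 + (x - tau) ^ 2).
Proof.
  intros hs. assert (hs1 : Rabs s <= sg) by (rewrite Rabs_pos_eq; lra).
  unfold integrand. eapply Rle_trans; [apply cnorm1_mul4|].
  pose proof (ctanh_bound x s hs1) as HT. pose proof (Cexp0_bound alpha (x - tau) s) as HE. fold (cwave x s) in HE.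
  pose proof (cid_kc_bound x s ltac:(lra)) as HZK.
  pose proof (cnorm1_pos (cid x s)); pose proof (cnorm1_pos (ctanh x s)); pose proof (cnorm1_pos (kc (x - tau, s))); pose proof (cnorm1_pos (cwave x s)).
  replace (cnorm1 (cid x s) * cnorm1 (ctanh x s) * cnorm1 (kc (x - tau, s)) * cnorm1 (cwave x s))
    with ((cnorm1 (cid x s) * cnorm1 (kc (x - tau, s))) * (cnorm1 (ctanh x s) * cnorm1 (cwave x s))) by ring.
  eapply Rle_trans. apply Rmult_le_compat; try (apply Rmult_le_pos; auto); eauto.
  apply Rmult_le_compat; eauto.
  unfold lorentz_const. pose proof (lorentz_den_pos (x - tau)). field_simplify; [|lra|lra]. lra.
Qed.

Lemma trunc_close A B del : 0 < del -> exists N, forall x s, A <= x <= B -> 0 <= s <= sg ->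
  cnorm1 (Csub (integrand x s) (integrand_trunc N x s)) <= del.
Proof.
  intros Hd.
  set (Q := Rabs A + Rabs B + 1).
  assert (HQ : 1 <= Q) by (unfold Q; pose proof (Rabs_pos A); pose proof (Rabs_pos B); lra).
  set (dd := del / (4 * Q * tanh_bound + 1)).
  pose proof tanh_bound_pos.
  assert (Hdd : 0 < dd) by (unfold dd; apply Rdiv_lt_0_compat; nra).
  destruct (partial_sum_unif a kc Hconv (Q + Rabs tau) dd ltac:(pose proof (Rabs_pos tau); lra) Hdd) as [N HN].
  exists N. intros x s hx hs.
  assert (hs1 : Rabs s <= sg) by (rewrite Rabs_pos_eq; lra).
  assert (hxA : Rabs x <= Rabs A + Rabs B) by (apply Rabs_le; split_Rabs; lra).
  destruct (HN N (x - tau, s) ltac:(lia)) as [h1 h2].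
  { unfold cnorm1; simpl. pose proof (Rabs_triang x (- tau)). rewrite Rabs_Ropp in H0.
    rewrite (Rabs_pos_eq s) by lra. unfold Q. unfold Rminus. lra. }
  unfold integrand, integrand_trunc. rewrite Csub_mul4. eapply Rle_trans; [apply cnorm1_mul4|].
  pose proof (cnorm1_sub_bound _ _ _ h1 h2) as HS.
  pose proof (ctanh_bound x s hs1) as HT. pose proof (Cexp0_bound alpha (x - tau) s) as HE. fold (cwave x s) in HE.
  pose proof (exp_neg_le1 alpha s Hal ltac:(lra)) as HE1.
  assert (HZ : cnorm1 (cid x s) <= Q) by (unfold cnorm1, cid, Q; simpl; rewrite Rminus_0_r; rewrite (Rabs_pos_eq s) by lra; lra).
  pose proof (cnorm1_pos (cid x s)); pose proof (cnorm1_pos (ctanh x s)); pose proof (cnorm1_pos (Csub (kc (x - tau, s)) (partial_sum a N (x - tau, s)))); pose proof (cnorm1_pos (cwave x s)).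
  apply Rle_trans with (Q * tanh_bound * (2 * dd) * 2).
  - apply Rmult_le_compat; try lra; [repeat apply Rmult_le_pos; lra|].
    apply Rmult_le_compat; try lra; [apply Rmult_le_pos; lra|].
    apply Rmult_le_compat; lra.
  - unfold dd. replace (Q * tanh_bound * (2 * (del / (4 * Q * tanh_bound + 1))) * 2) with (del * (4 * Q * tanh_bound / (4 * Q * tanh_bound + 1))) by (field; nra).
    assert (4 * Q * tanh_bound / (4 * Q * tanh_bound + 1) <= 1).
    { apply (Rmult_le_reg_r (4 * Q * tanh_bound + 1)); [nra|]. unfold Rdiv. rewrite Rmult_assoc, Rinv_l by nra. nra. }
    nra.
Qed.

(* kc is continuous along horizontal lines, as a locally uniform limit of polynomials. *)
Lemma kc_cont s x : Rabs s <= 1 ->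
  continuity_pt (fun y => fst (kc (y - tau, s))) x /\ continuity_pt (fun y => snd (kc (y - tau, s))) x.
Proof.
  intros hs.
  assert (H : forall del, 0 < del -> exists N, forall y, Rabs (y - x) <= 1 ->
     Rabs (fst (kc (y - tau, s)) - fst (partial_sum a N (y - tau, s))) <= del /\
     Rabs (snd (kc (y - tau, s)) - snd (partial_sum a N (y - tau, s))) <= del).
  { intros del hd.
    destruct (partial_sum_unif a kc Hconv (Rabs x + 1 + Rabs tau + 1) del
      ltac:(pose proof (Rabs_pos x); pose proof (Rabs_pos tau); lra) hd) as [N HN].
    exists N. intros y hy. apply HN; auto. unfold cnorm1; simpl.
    assert (Rabs y <= Rabs x + 1).
    { replace y with (x + (y - x)) by ring. eapply Rle_trans; [apply Rabs_triang|lra]. }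
    pose proof (Rabs_triang y (- tau)). rewrite Rabs_Ropp in H0. unfold Rminus. lra. }
  split; apply cont_of_unif_approx; intros del hd; destruct (H del hd) as [N HN].
  - exists (fun y => fst (partial_sum a N (y - tau, s))). split.
    + apply (holo_cont 1 (fun x s => partial_sum a N (x - tau, s))); auto. apply holo_partial_sum.
    + intros y hy; apply HN; auto.
  - exists (fun y => snd (partial_sum a N (y - tau, s))). split.
    + apply (holo_cont 1 (fun x s => partial_sum a N (x - tau, s))); auto. apply holo_partial_sum.
    + intros y hy; apply HN; auto.
Qed.

Lemma integrand_cont s x : Rabs s <= sg ->
  continuity_pt (fun y => fst (integrand y s)) x /\ continuity_pt (fun y => snd (integrand y s)) x.
Proof.
  intros hs.
  assert (hs1 : Rabs s <= 1) by lra.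
  destruct (holo_cont sg cid s x ltac:(eexists; apply hol_z) hs) as [z1 z2].
  destruct (holo_cont sg ctanh s x holo_ctanh hs) as [t1 t2].
  destruct (holo_cont sg cwave s x ltac:(eexists; apply hol_exp) hs) as [e1 e2].
  destruct (kc_cont s x hs1) as [k1 k2].
  destruct (cont_Cmul (fun y => kc (y - tau, s)) (fun y => cwave y s) x k1 k2 e1 e2) as [m1 m2].
  destruct (cont_Cmul (fun y => ctanh y s) (fun y => Cmul (kc (y - tau, s)) (cwave y s)) x t1 t2 m1 m2) as [n1 n2].
  exact (cont_Cmul (fun y => cid y s) (fun y => Cmul (ctanh y s) (Cmul (kc (y - tau, s)) (cwave y s))) x z1 z2 n1 n2).
Qed.

Lemma ctanh_real x : ctanh x 0 = (tanh (PI * x), 0).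
Proof.
  unfold ctanh, cosh_den, Cexp, Cinv, Cnsq, Cadd, Cmul; simpl.
  replace (0 * (x - 0) + 2 * PI * 0) with 0 by ring.
  replace (2 * PI * (x - 0) - 0 * 0) with (PI * x + PI * x) by ring.
  rewrite cos_0, sin_0, exp_plus. unfold tanh, sinh, cosh. rewrite exp_Ropp.
  pose proof (exp_pos (PI * x)). set (E := exp (PI * x)) in *.
  f_equal; field; nra.
Qed.

Lemma real_integrand_eq x : real_integrand x = 2 * fst (integrand x 0).
Proof.
  unfold real_integrand, integrand, Kalpha. rewrite Hk. unfold Cmul at 1. rewrite ctanh_real. unfold cid, cwave, Cexp, Cmul; simpl.
  replace (0 * (x - tau) - alpha * 0) with 0 by ring. rewrite exp_0.
  replace (alpha * (x - tau) + 0 * 0) with (alpha * (x - tau)) by ring. ring.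
Qed.

Lemma real_integrand_cont x : continuity_pt real_integrand x.
Proof.
  replace real_integrand with (fun y => 2 * fst (integrand y 0)) by (apply functional_extensionality; intro; rewrite real_integrand_eq; auto).
  apply (continuity_pt_scal (fun y => fst (integrand y 0))). apply integrand_cont. rewrite Rabs_R0; lra.
Qed.

Lemma lorentz_const_nonneg : 0 <= lorentz_const.
Proof.
  unfold lorentz_const. pose proof tanh_bound_pos; pose proof C2_nonneg; pose proof (Rabs_pos tau).
  apply Rmult_le_pos; [apply Rmult_le_pos|]; nra.
Qed.

Definition trunc_close_on A B N del : Prop :=
  forall x s, A <= x <= B -> 0 <= s <= sg -> cnorm1 (Csub (integrand x s) (integrand_trunc N x s)) <= del.

Lemma trunc_cont N s A B : Rabs s <= sg -> cont_on (fun x => fst (integrand_trunc N x s)) A B.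
Proof. intros hs x _. apply (holo_cont sg (integrand_trunc N) s x); auto. apply holo_trunc. Qed.

Lemma trunc_real_segment A B N del : A <= B -> trunc_close_on A B N del ->
  Rabs (Integ real_integrand A B - 2 * Integ (fun x => fst (integrand_trunc N x 0)) A B) <= 2 * del * (B - A).
Proof.
  intros AB HN.
  assert (CG : cont_on (fun x => fst (integrand_trunc N x 0)) A B)
    by (apply trunc_cont; rewrite Rabs_R0; lra).
  assert (CR : cont_on real_integrand A B) by (intros x _; apply real_integrand_cont).
  rewrite <- Integ_scal, <- Integ_minus by (auto; intros x hx; apply (continuity_pt_scal (fun x => fst (integrand_trunc N x 0))); apply CG; auto).
  apply Integ_bound; auto.
  - intros x hx. apply (continuity_pt_minus real_integrand (fun x => 2 * fst (integrand_trunc N x 0))); [apply CR; auto|].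
    apply (continuity_pt_scal (fun x => fst (integrand_trunc N x 0))). apply CG; auto.
  - intros x hx. rewrite real_integrand_eq.
    replace (2 * fst (integrand x 0) - 2 * fst (integrand_trunc N x 0))
      with (2 * (fst (integrand x 0) - fst (integrand_trunc N x 0))) by ring.
    rewrite Rabs_mult, Rabs_pos_eq by lra.
    pose proof (HN x 0 ltac:(lra) ltac:(lra)). pose proof (cnorm1_fst (Csub (integrand x 0) (integrand_trunc N x 0))).
    unfold Csub in *; cbn [fst snd] in *. lra.
Qed.

Lemma trunc_top_segment A B N del sig : A <= B -> 0 <= sig < sg -> trunc_close_on A B N del ->
  Rabs (Integ (fun x => fst (integrand_trunc N x sig)) A B) <=
    lorentz_const * exp (- alpha * sig) * (atan (B - tau) - atan (A - tau)) + del * (B - A).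
Proof.
  intros AB hsig HN.
  set (K := lorentz_const * exp (- alpha * sig)).
  eapply Rle_trans.
  - apply (Integ_abs_le _ (fun x => K / (1 + (x - tau) ^ 2) + 1 * (fun _ => del) x)); auto.
    + apply trunc_cont; rewrite Rabs_pos_eq; lra.
    + apply cont_on_lin; [intros x _; apply lorentz_cont|apply cont_on_const].
    + intros x hx. cbv beta.
      pose proof (HN x sig ltac:(lra) ltac:(lra)).
      pose proof (cnorm1_fst (Csub (integrand x sig) (integrand_trunc N x sig))).
      pose proof (integrand_bound x sig ltac:(lra)). pose proof (cnorm1_fst (integrand x sig)).
      unfold Csub in *; cbn [fst snd] in *.
      pose proof (Rabs_triang (fst (integrand x sig)) (- (fst (integrand x sig) - fst (integrand_trunc N x sig)))).
      rewrite Rabs_Ropp in *.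
      replace (fst (integrand x sig) + - (fst (integrand x sig) - fst (integrand_trunc N x sig)))
        with (fst (integrand_trunc N x sig)) in * by ring.
      unfold K. lra.
  - rewrite Integ_lin by first [exact AB | intros x _; apply lorentz_cont | apply cont_on_const].
    rewrite Integ_lorentz, Integ_const by auto. unfold K. lra.
Qed.

Lemma trunc_side A B N del x c : trunc_close_on A B N del -> A <= x <= B -> 0 <= c <= sg ->
  Rabs (snd (integrand_trunc N x c)) <= lorentz_const / (1 + (x - tau) ^ 2) + del.
Proof.
  intros HN hx hc.
  pose proof (HN x c hx hc). pose proof (cnorm1_snd (Csub (integrand x c) (integrand_trunc N x c))).
  pose proof (integrand_bound x c hc). pose proof (cnorm1_snd (integrand x c)).
  assert (lorentz_const * exp (- alpha * c) / (1 + (x - tau) ^ 2) <= lorentz_const / (1 + (x - tau) ^ 2)).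
  { unfold Rdiv. apply Rmult_le_compat_r; [left; apply Rinv_0_lt_compat, lorentz_den_pos|].
    pose proof lorentz_const_nonneg. pose proof (exp_neg_le1 alpha c Hal ltac:(lra)). nra. }
  unfold Csub in *; cbn [fst snd] in *.
  pose proof (Rabs_triang (snd (integrand x c)) (- (snd (integrand x c) - snd (integrand_trunc N x c)))).
  rewrite Rabs_Ropp in *.
  replace (snd (integrand x c) + - (snd (integrand x c) - snd (integrand_trunc N x c)))
    with (snd (integrand_trunc N x c)) in * by ring.
  lra.
Qed.

(* Integral over a segment: by the contour shift applied to a close truncation, the
   integral over [A, B] is bounded by the raised segment plus the two vertical sides. *)
Lemma segment_bound sig A B : 0 <= sig < sg -> A <= B ->
  Rabs (Integ real_integrand A B) <= 2 * (lorentz_const * exp (- alpha * sig) * (atan (B - tau) - atan (A - tau))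
     + sig * (lorentz_const / (1 + (A - tau) ^ 2) + lorentz_const / (1 + (B - tau) ^ 2))).
Proof.
  intros hsig AB.
  apply Rle_plus_epsilon. intros eps heps.
  set (del := eps / (4 * (B - A) + 4 * sig + 1)).
  assert (hdel : 0 < del) by (unfold del; apply Rdiv_lt_0_compat; lra).
  assert (Hdel_eps : del * (4 * (B - A) + 4 * sig) <= eps).
  { unfold del. apply Rle_trans with (eps / (4 * (B - A) + 4 * sig + 1) * (4 * (B - A) + 4 * sig + 1)).
    - apply Rmult_le_compat_l; [fold del; lra|lra].
    - unfold Rdiv; rewrite Rmult_assoc, Rinv_l by lra; lra. }
  destruct (trunc_close A B del hdel) as [N HN].
  destruct (holo_trunc N) as [dG HG].
  pose proof (trunc_real_segment A B N del AB HN) as Sreal.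
  pose proof (trunc_top_segment A B N del sig AB hsig HN) as Stop.
  destruct (contour_shift sg (integrand_trunc N) dG A B sig HG AB hsig) as [c [hc Hc]].
  pose proof (trunc_side A B N del A c HN ltac:(lra) ltac:(lra)) as SA.
  pose proof (trunc_side A B N del B c HN ltac:(lra) ltac:(lra)) as SB.
  set (I0 := Integ (fun x => fst (integrand_trunc N x 0)) A B) in *.
  assert (Rabs I0 <=
     lorentz_const * exp (- alpha * sig) * (atan (B - tau) - atan (A - tau)) + del * (B - A)
     + sig * (lorentz_const / (1 + (A - tau) ^ 2) + del + (lorentz_const / (1 + (B - tau) ^ 2) + del))).
  { replace I0 with (Integ (fun x => fst (integrand_trunc N x sig)) A B
                     + sig * (snd (integrand_trunc N B c) - snd (integrand_trunc N A c))) by lra.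
    eapply Rle_trans; [apply Rabs_triang|]. apply Rplus_le_compat; auto.
    rewrite Rabs_mult, Rabs_pos_eq by lra. apply Rmult_le_compat_l; [lra|].
    replace (snd (integrand_trunc N B c) - snd (integrand_trunc N A c))
      with (snd (integrand_trunc N B c) + - snd (integrand_trunc N A c)) by ring.
    eapply Rle_trans; [apply Rabs_triang|]. rewrite Rabs_Ropp. lra. }
  replace (Integ real_integrand A B) with ((Integ real_integrand A B - 2 * I0) + 2 * I0) by ring.
  eapply Rle_trans; [apply Rabs_triang|]. rewrite Rabs_mult, (Rabs_pos_eq 2) by lra.
  lra.
Qed.

End Integrand.

(* K_alpha only depends on |alpha|, so it suffices to treat alpha >= 0. *)
Lemma Kalpha_abs k alpha r : Kalpha k alpha r = Kalpha k (Rabs alpha) r.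
Proof.
  unfold Kalpha. destruct (Rle_dec 0 alpha).
  - rewrite Rabs_pos_eq; auto.
  - rewrite Rabs_left by lra. replace (- alpha * r) with (- (alpha * r)) by ring. rewrite cos_neg; auto.
Qed.

Lemma decay_cube kc : rapid_decay_strips kc ->
  exists C2, forall x y, Rabs y <= 1 -> cnorm1 (kc (x, y)) <= C2 / (1 + Rabs x) ^ 3.
Proof.
  intros Hdec. destruct (Hdec 1 3%nat) as [C HC]. exists (2 * C). intros x y hy.
  eapply Rle_trans; [apply cnorm1_Cnorm|]. specialize (HC x y hy).
  unfold Rdiv in *. lra.
Qed.

(* Choice of the heights: the contour is moved to height sig >= 1/2 - eps inside a strip
   of width sg < 1/2 on which tanh(pi z) is holomorphic. *)
Lemma strip_heights eps : 0 < eps -> exists sg sig, 0 < sg < 1/2 /\ 0 <= sig < sg /\ 1/2 - eps <= sig.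
Proof.
  intros heps. pose proof (Rmin_l eps (1/2)); pose proof (Rmin_r eps (1/2)).
  assert (0 < Rmin eps (1/2)) by (apply Rmin_pos; lra).
  exists ((1/2 - Rmin eps (1/2) + 1/2) / 2), (1/2 - Rmin eps (1/2)). repeat split; lra.
Qed.

Lemma shifted_integral_bound a kc k C2 sg sig tau alpha
  (Hconv : forall z : R * R,
    Un_cv (fun N => sum_f_R0 (fun n => a n * fst (Cpow z n)) N) (fst (kc z)) /\
    Un_cv (fun N => sum_f_R0 (fun n => a n * snd (Cpow z n)) N) (snd (kc z)))
  (Hk : forall x, kc (x, 0) = (k x, 0))
  (Hdec : forall x y, Rabs y <= 1 -> cnorm1 (kc (x, y)) <= C2 / (1 + Rabs x) ^ 3)
  (Hsg : 0 < sg < 1/2) (hsig : 0 <= sig < sg) :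
  exists I, is_int_R (fun r => r * tanh (PI * r) * Kalpha k alpha (r - tau)) I /\
    Rabs I <= 2 * lorentz_const tau sg C2 * PI * exp (- Rabs alpha * sig).
Proof.
  set (al := Rabs alpha). assert (Hal : 0 <= al) by apply Rabs_pos.
  set (K1 := lorentz_const tau sg C2).
  assert (HK1 : 0 <= K1) by exact (lorentz_const_nonneg kc tau sg Hsg C2 Hdec).
  replace (fun r => r * tanh (PI * r) * Kalpha k alpha (r - tau)) with (real_integrand tau al k)
    by (apply functional_extensionality; intro r; unfold real_integrand; rewrite (Kalpha_abs k alpha); auto).
  apply (improper_integral_bound (real_integrand tau al k) tau (2 * K1)) with (K' := 2 * sig * K1).
  - intros x; apply (real_integrand_cont a kc tau al sg Hsg k Hconv Hk).
  - lra.
  - intros x. rewrite (real_integrand_eq kc tau al k Hk), Rabs_mult, Rabs_pos_eq by lra.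
    pose proof (integrand_bound kc tau al sg Hsg C2 Hdec x 0 ltac:(lra)) as Hb.
    pose proof (cnorm1_fst (integrand kc tau al x 0)).
    rewrite Rmult_0_r, exp_0, Rmult_1_r in Hb. unfold Rdiv in *. fold K1 in Hb. lra.
  - apply Rmult_le_pos; [lra|exact HK1].
  - intros A B AB. eapply Rle_trans.
    { apply (segment_bound a kc tau al sg Hsg k C2 Hconv Hk Hdec Hal sig A B hsig AB). }
    fold K1. pose proof (atan_bound (B - tau)); pose proof (atan_bound (A - tau)).
    assert (0 <= K1 * exp (- al * sig)) by (pose proof (exp_pos (- al * sig)); nra).
    assert (K1 * exp (- al * sig) * (atan (B - tau) - atan (A - tau)) <= K1 * exp (- al * sig) * PI)
      by (apply Rmult_le_compat_l; lra).
    unfold Rdiv in *. lra.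
Qed.

Theorem mainTheorem12 (k : R -> R)
  (Hk_even : forall r : R, k (- r) = k r)
  (Hk_entire : exists kc : R * R -> R * R,
      entire_extension k kc /\ rapid_decay_strips kc)
  (Hk_fourier : forall u : R, exists v : R,
      is_int_R (fun r => cos (u * r) * k r) v /\ 0 <= v /\ (1 < Rabs u -> v = 0)) :
  forall eps : R, 0 < eps -> exists C : R, forall alpha t : R, 1 <= t ->
    exists I1 I2 : R,
      is_int_R (fun r => r * tanh (PI * r) * Kalpha k alpha (r - t)) I1 /\
      is_int_R (fun r => r * tanh (PI * r) * Kalpha k alpha (r + t)) I2 /\
      Rabs I1 + Rabs I2 <= C * t * exp (- Rabs alpha * (1 / 2 - eps)).
Proof.
  intros eps heps.
  destruct Hk_entire as [kc [[a [Hconv Hk]] Hdec0]].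
  destruct (decay_cube kc Hdec0) as [C2 Hdec].
  destruct (strip_heights eps heps) as [sg [sig [Hsg [hsig Hsig]]]].
  pose proof (lorentz_const_nonneg kc 0 sg Hsg C2 Hdec) as HK0.
  exists (8 * lorentz_const 0 sg C2 * PI). intros alpha t ht.
  destruct (shifted_integral_bound a kc k C2 sg sig t alpha Hconv Hk Hdec Hsg hsig) as [I1 [H1 B1]].
  destruct (shifted_integral_bound a kc k C2 sg sig (- t) alpha Hconv Hk Hdec Hsg hsig) as [I2 [H2 B2]].
  exists I1, I2. split; [exact H1|split].
  - replace (fun r => r * tanh (PI * r) * Kalpha k alpha (r + t))
      with (fun r => r * tanh (PI * r) * Kalpha k alpha (r - - t)); auto.
    apply functional_extensionality; intro r. now replace (r - - t) with (r + t) by ring.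
  - (* lorentz_const tau = (1 + |tau|) lorentz_const 0 <= 2 t lorentz_const 0, and sig >= 1/2 - eps *)
    unfold lorentz_const in *. rewrite Rabs_Ropp in B2. rewrite (Rabs_pos_eq t) in B1, B2 by lra.
    rewrite Rabs_R0, Rplus_0_r, Rmult_1_r in HK0 |- *.
    pose proof (exp_mono (- Rabs alpha * sig) (- Rabs alpha * (1 / 2 - eps))
                  ltac:(pose proof (Rabs_pos alpha); nra)).
    pose proof (exp_pos (- Rabs alpha * sig)). pose proof PI_RGT_0.
    set (E := exp (- Rabs alpha * sig)) in *. set (E' := exp (- Rabs alpha * (1 / 2 - eps))) in *.
    set (T := 2 * tanh_bound sg * C2) in *.
    assert ((1 + t) * E <= 2 * t * E') by nra.
    assert (T * PI * ((1 + t) * E) <= T * PI * (2 * t * E')) by (apply Rmult_le_compat_l; nra).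
    nra.
Qed.
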